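(* There is an absolute constant $c>0$ such that the following holds. Let $P$ be any (not necessarily reversible) Markov chain on a finite set $X$, let $S,M\subseteq X$ be disjoint, let $\kappa$ be a distribution supported on $S$, and let $T\ge2$ be an even integer. Let $Y=(Y_i)_{i\ge0}$ be the chain with transition matrix $P$ and $Y_0\sim\kappa$, and let $E$ be the event that $\mathrm{ct}\le T$ and $S_Y[0,\mathrm{ht}]=1$; assume $\Pr(E)>0$. Set $r_S=T/2$, and for $r_M\in R=\{1,2,4,\dots,2^{\lceil\log_2(14T)\rceil}\}$ let $Y^{(r)}$, $r=(r_S,r_M)$, be obtained from $Y$ by replacing each entry $Y_i\in S$ by an independent $\mathrm{Geom}(1/r_S)$ number of consecutive copies and each entry $Y_i\in M$ by an independent $\mathrm{Geom}(1/r_M)$ number of consecutive copies. If $r_M\in R$, $t\in\{1,\dots,30T\}$ and $t'\in\{1,\dots,30T\}$ are chosen independently and uniformly at random, then \[ \mathbb E_{t,t',r_M}\Big[\Pr\big(Y^{(r)}_t\in M,\;Y^{(r)}_{t+t'}\in S\ \big|\ E\big)\Big]\ge\frac{c}{\log T}. \]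
   Context: For a sequence $Y$: $\mathrm{ht}=\min\{i\ge0:Y_i\in M\}$, $\mathrm{ct}=\min\{i>\mathrm{ht}:Y_i\in S\}$, and $S_Y[0,\mathrm{ht}]=|\{i\in\{0,\dots,\mathrm{ht}\}:Y_i\in S\}|$. $\mathrm{Geom}(1/r)$ denotes the distribution on $\{1,2,\dots\}$ with $\Pr(K=k)=(1-1/r)^{k-1}/r$ (mean $r$). Sequences are indexed from $0$. *)

From Stdlib Require Import Reals List Arith ClassicalEpsilon.
Import ListNotations.
Open Scope R_scope.

(** States of the finite set X are 0, ..., n-1.  Subsets are boolean predicates. *)

Definition sumR (l : list R) : R := fold_right Rplus 0 l.
Definition ind (b : bool) : R := if b then 1 else 0.

Fixpoint tuples (vals : list nat) (D : nat) : list (list nat) :=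
  match D with
  | O => [nil]
  | S D' => flat_map (fun a => map (cons a) (tuples vals D')) vals
  end.

Definition sum_tuples (vals : list nat) (D : nat) (F : list nat -> R) : R :=
  sumR (map F (tuples vals D)).

Fixpoint chain_w (P : nat -> nat -> R) (x : nat) (l : list nat) : R :=
  match l with
  | nil => 1
  | y :: l' => P x y * chain_w P y l'
  end.

Definition path_weight (kappa : nat -> R) (P : nat -> nat -> R) (y : list nat) : R :=
  match y with
  | nil => 0
  | y0 :: l => kappa y0 * chain_w P y0 l
  end.

Definition geom (r : R) (k : nat) : R :=
  match k with
  | O => 0
  | S k' => (1 - / r) ^ k' * / r
  end.

(** Law of the number of copies of an entry x: Geom(1/rS) if x in S,
    Geom(1/rM) if x in M, and exactly one copy otherwise. *)
Definition rep_w (rS rM : R) (S M : nat -> bool) (x k : nat) : R :=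
  if S x then geom rS k else if M x then geom rM k else ind (Nat.eqb k 1).

Fixpoint cnt_w (rS rM : R) (S M : nat -> bool) (y k : list nat) : R :=
  match y, k with
  | y0 :: y', k0 :: k' => rep_w rS rM S M y0 k0 * cnt_w rS rM S M y' k'
  | _, _ => 1
  end.

(** Y^(r): each entry y_i replaced by k_i consecutive copies. *)
Definition expand (y k : list nat) : list nat :=
  flat_map (fun p => repeat (snd p) (fst p)) (combine k y).

Fixpoint first_idx (p : nat -> bool) (l : list nat) : option nat :=
  match l with
  | nil => None
  | x :: l' => if p x then Some O else option_map S (first_idx p l')
  end.

Definition countb (p : nat -> bool) (l : list nat) : nat :=
  length (filter p l).

(** The event E: ct <= T and S_Y[0,ht] = 1, where ht = first index i >= 0
    with Y_i in M and ct = first index i > ht with Y_i in S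
    (evaluated on a prefix y of Y of length >= T+1). *)
Definition E_ev (S M : nat -> bool) (T : nat) (y : list nat) : bool :=
  match first_idx M y with
  | None => false
  | Some h =>
      match first_idx S (skipn (Datatypes.S h) y) with
      | None => false
      | Some d =>
          Nat.leb (Datatypes.S h + d) T &&
          Nat.eqb (countb S (firstn (Datatypes.S h) y)) 1
      end
  end.

(** Supremum (of a set of reals), chosen classically; used for countable sums
    of nonnegative terms. *)
Definition Rsup (A : R -> Prop) : R := epsilon (inhabits 0) (fun l => is_lub A l).

(** Number of entries of Y needed: indices of Y^(r) up to 60T. *)
Definition Dlen (T : nat) : nat := 60 * T + 1.

Definition probE (n : nat) (P : nat -> nat -> R) (kappa : nat -> R)
  (S M : nat -> bool) (T : nat) : R :=
  sum_tuples (seq 0 n) (Dlen T) (fun y => path_weight kappa P y * ind (E_ev S M T y)).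

(** Partial sums (copy numbers truncated at <= L) of
    Pr(Y^(r)_t in M, Y^(r)_{t+t'} in S, E), r = (rS, rM). *)
Definition joint_partial (n : nat) (P : nat -> nat -> R) (kappa : nat -> R)
  (S M : nat -> bool) (T : nat) (rS rM : R) (t t' L : nat) : R :=
  sum_tuples (seq 0 n) (Dlen T) (fun y =>
    sum_tuples (seq 1 L) (Dlen T) (fun k =>
      path_weight kappa P y * cnt_w rS rM S M y k *
      ind (E_ev S M T y && M (nth t (expand y k) 0%nat)
                        && S (nth (t + t') (expand y k) 0%nat)))).

Definition joint (n : nat) (P : nat -> nat -> R) (kappa : nat -> R)
  (S M : nat -> bool) (T : nat) (rS rM : R) (t t' : nat) : R :=
  Rsup (fun x => exists L, x = joint_partial n P kappa S M T rS rM t t' L).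

Definition cond_prob n P kappa S M T rS rM t t' : R :=
  joint n P kappa S M T rS rM t t' / probE n P kappa S M T.

(** R = {2^0, ..., 2^J}, J = ceil(log2(14T)). *)
Definition Jmax (T : nat) : nat := Nat.log2_up (14 * T).

Definition avg_cond (n : nat) (P : nat -> nat -> R) (kappa : nat -> R)
  (S M : nat -> bool) (T : nat) : R :=
  sumR (map (fun t => sumR (map (fun t' => sumR (map (fun j =>
      cond_prob n P kappa S M T (INR T / 2) (2 ^ j) t t')
    (seq 0 (Jmax T + 1)))) (seq 1 (30 * T)))) (seq 1 (30 * T)))
  / (INR (30 * T) * INR (30 * T) * INR (Jmax T + 1)).

(** Fix a path [y] of the chain on which [E] holds. As [kappa] lives on [S], [y_0] is in [S];
    let [s <= T] be the first return to [S] and [m >= 1] the number of [M]-entries among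
    [y_0, ..., y_(s-1)], and choose [r_M = 2^j] in [R] with [T <= m r_M <= 2T]. Given the copy
    numbers [k], if the expansion of [y_0, ..., y_(s-1)] and the block of [y_s] both have length
    at most [15T], then every [M]-copy of that prefix sees all [k_s] copies of [y_s] within
    [30T] steps. An inclusion-exclusion over the [M]-blocks (designate one of them, keep the
    first block at most [4T] and it at most [5T], and pay [k_j / 5T] for each other [M]-block [j])
    turns this into a lower bound for the number of good pairs [(t, t')] whose mean factorizes,
    by independence of the copy numbers, and is at least [T^2 / 1000]. Summing over [t], [t']
    and [r_M], the chosen [r_M] alone contributes [T^2 Pr(E) / 1000]; dividing by
    [(30T)^2 |R|] with [|R| <= 14 ln T] gives the constant [1 / 12600000]. *)

From Stdlib Require Import Reals List Lia Lra ClassicalEpsilon.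
Open Scope R_scope.

(** * Finite sums and products *)

Lemma Rdiv_nonneg a b : 0 <= a -> 0 < b -> 0 <= a / b.
Proof. intros. unfold Rdiv. apply Rmult_le_pos; [|left; apply Rinv_0_lt_compat]; assumption. Qed.

Lemma sumR_app (l1 l2 : list R) : sumR (l1 ++ l2) = sumR l1 + sumR l2.
Proof. induction l1; simpl; [lra|]. rewrite IHl1; lra. Qed.

Lemma sumR_add {A} (f g : A -> R) l :
  sumR (map (fun x => f x + g x) l) = sumR (map f l) + sumR (map g l).
Proof. induction l; simpl; [lra|]. rewrite IHl; lra. Qed.

Lemma sumR_sub {A} (f g : A -> R) l :
  sumR (map (fun x => f x - g x) l) = sumR (map f l) - sumR (map g l).
Proof. induction l; simpl; [lra|]. rewrite IHl; lra. Qed.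

Lemma sumR_scal_l {A} c (f : A -> R) l :
  sumR (map (fun x => c * f x) l) = c * sumR (map f l).
Proof. induction l; simpl; [lra|]. rewrite IHl; lra. Qed.

Lemma sumR_scal_r {A} c (f : A -> R) l :
  sumR (map (fun x => f x * c) l) = sumR (map f l) * c.
Proof. induction l; simpl; [lra|]. rewrite IHl; lra. Qed.

Lemma sumR_ext {A} (f g : A -> R) l :
  (forall x, In x l -> f x = g x) -> sumR (map f l) = sumR (map g l).
Proof. intros. f_equal. apply map_ext_in. auto. Qed.

Lemma sumR_le {A} (f g : A -> R) l :
  (forall x, In x l -> f x <= g x) -> sumR (map f l) <= sumR (map g l).
Proof.
  induction l as [|a l IH]; simpl; intros Hfg; [lra|].
  assert (f a <= g a) by auto. specialize (IH (fun x Hx => Hfg x (or_intror Hx))). lra.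
Qed.

Lemma sumR_nonneg {A} (f : A -> R) l :
  (forall x, In x l -> 0 <= f x) -> 0 <= sumR (map f l).
Proof.
  induction l as [|a l IH]; simpl; intros Hf; [lra|].
  assert (0 <= f a) by auto. specialize (IH (fun x Hx => Hf x (or_intror Hx))). lra.
Qed.

Lemma sumR_const {A} c (l : list A) : sumR (map (fun _ => c) l) = INR (length l) * c.
Proof. induction l; simpl; [lra|]. rewrite IHl. destruct (length l); simpl; lra. Qed.

Lemma sumR_swap {A B} (F : A -> B -> R) la lb :
  sumR (map (fun a => sumR (map (fun b => F a b) lb)) la) =
  sumR (map (fun b => sumR (map (fun a => F a b) la)) lb).
Proof.
  induction la; simpl.
  - induction lb; simpl; [lra|]. rewrite <- IHlb. lra.
  - rewrite IHla, <- sumR_add. reflexivity.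
Qed.

Lemma sumR_flat_map {A B} (F : B -> R) (g : A -> list B) l :
  sumR (map F (flat_map g l)) = sumR (map (fun a => sumR (map F (g a))) l).
Proof. induction l; simpl; [lra|]. rewrite map_app, sumR_app, IHl. lra. Qed.

Lemma sumR_ge_term {A} (f : A -> R) l x :
  (forall y, In y l -> 0 <= f y) -> In x l -> f x <= sumR (map f l).
Proof.
  intros Hf Hx. induction l as [|a l IH]; simpl in *; [contradiction|].
  assert (0 <= f a) by auto.
  assert (0 <= sumR (map f l)) by (apply sumR_nonneg; auto).
  destruct Hx as [<-|Hx]; [lra|]. specialize (IH (fun y Hy => Hf y (or_intror Hy)) Hx). lra.
Qed.

Lemma sumR_swap3_scal {A B C} (c : C -> R) (F : A -> B -> C -> R) la lb lc :
  sumR (map (fun a => sumR (map (fun b => sumR (map (fun z => c z * F a b z) lc)) lb)) la) =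
  sumR (map (fun z => c z * sumR (map (fun a => sumR (map (fun b => F a b z) lb)) la)) lc).
Proof.
  rewrite (sumR_ext _ (fun a => sumR (map (fun z => c z * sumR (map (fun b => F a b z) lb)) lc))).
  - rewrite sumR_swap. apply sumR_ext. intros z _. rewrite sumR_scal_l. reflexivity.
  - intros a _. rewrite sumR_swap. apply sumR_ext. intros z _. apply sumR_scal_l.
Qed.

Lemma sumR_swap4_scal {A B C Z} (c : Z -> R) (F : A -> B -> C -> Z -> R) la lb lc lz :
  sumR (map (fun a => sumR (map (fun b => sumR (map (fun x =>
    sumR (map (fun z => c z * F a b x z) lz)) lc)) lb)) la) =
  sumR (map (fun z => c z * sumR (map (fun a => sumR (map (fun b =>
    sumR (map (fun x => F a b x z) lc)) lb)) la)) lz).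
Proof.
  rewrite (sumR_ext _ (fun a => sumR (map (fun z => c z *
    sumR (map (fun b => sumR (map (fun x => F a b x z) lc)) lb)) lz)))
    by (intros; apply sumR_swap3_scal).
  rewrite sumR_swap. apply sumR_ext. intros z _. apply sumR_scal_l.
Qed.

Lemma sumR_linear_incl_excl {K} (V : list K) (I J : list nat) (c : K -> R) (a : nat -> R)
  (b : nat -> nat -> R) (P : nat -> K -> R) (Q : nat -> nat -> K -> R) :
  sumR (map (fun k => c k * sumR (map (fun i =>
    a i * (P i k - sumR (map (fun j => b i j * Q i j k) J))) I)) V) =
  sumR (map (fun i => a i * (sumR (map (fun k => c k * P i k) V) -
    sumR (map (fun j => b i j * sumR (map (fun k => c k * Q i j k) V)) J))) I).
Proof.
  rewrite (sumR_ext _ (fun k => sumR (map (fun i => a i * (c k * P i k) -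
      sumR (map (fun j => a i * b i j * (c k * Q i j k)) J)) I))).
  2:{ intros k _. rewrite <- sumR_scal_l. apply sumR_ext. intros i _.
      rewrite (sumR_ext (fun j => a i * b i j * (c k * Q i j k))
                        (fun j => (a i * c k) * (b i j * Q i j k))) by (intros; ring).
      rewrite sumR_scal_l. ring. }
  rewrite sumR_swap. apply sumR_ext. intros i _.
  rewrite sumR_sub, sumR_scal_l, (sumR_swap (fun k j => a i * b i j * (c k * Q i j k))).
  rewrite (sumR_ext (fun j => sumR (map (fun k => a i * b i j * (c k * Q i j k)) V))
                    (fun j => a i * (b i j * sumR (map (fun k => c k * Q i j k) V)))).
  2:{ intros j _. rewrite sumR_scal_l. ring. }
  rewrite sumR_scal_l. ring.
Qed.

Lemma sumR_app_ge_l (F : nat -> R) l1 l2 :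
  (forall x, In x l2 -> 0 <= F x) -> sumR (map F l1) <= sumR (map F (l1 ++ l2)).
Proof. intros Hl2. rewrite map_app, sumR_app. pose proof (sumR_nonneg F l2 Hl2). lra. Qed.

Lemma sumR_app_ge_r (F : nat -> R) l1 l2 :
  (forall x, In x l1 -> 0 <= F x) -> sumR (map F l2) <= sumR (map F (l1 ++ l2)).
Proof. intros Hl1. rewrite map_app, sumR_app. pose proof (sumR_nonneg F l1 Hl1). lra. Qed.

Lemma sumR_seq_prefix_le (F : nat -> R) st a n : (a <= n)%nat -> (forall x, 0 <= F x) ->
  sumR (map F (seq st a)) <= sumR (map F (seq st n)).
Proof.
  intros. replace n with (a + (n - a))%nat by lia. rewrite seq_app. apply sumR_app_ge_l. auto.
Qed.

Lemma ind_andb a b : ind (andb a b) = ind a * ind b.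
Proof. destruct a, b; unfold ind; simpl; lra. Qed.

Lemma ind_bounds b : 0 <= ind b <= 1.
Proof. destruct b; unfold ind; lra. Qed.

Lemma sumR_delta (F : nat -> R) n a p : (a <= p < a + n)%nat ->
  sumR (map (fun x => ind (Nat.eqb x p) * F x) (seq a n)) = F p.
Proof.
  revert a. induction n; intros a Hp; [lia|]. simpl.
  destruct (Nat.eqb_spec a p) as [<-|Hap].
  - rewrite (sumR_ext _ (fun _ => 0)), sumR_const; [unfold ind; simpl; lra|].
    intros x Hx%in_seq. destruct (Nat.eqb_spec x a); [lia|]. unfold ind; lra.
  - rewrite IHn by lia. unfold ind; lra.
Qed.

Lemma INR_length_filter {A} (p : A -> bool) l :
  INR (length (filter p l)) = sumR (map (fun x => ind (p x)) l).
Proof.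
  induction l as [|a l IH]; simpl; [reflexivity|].
  destruct (p a); cbn [length]; rewrite <- IH; unfold ind; [rewrite S_INR|]; lra.
Qed.

Definition prodR (l : list R) : R := fold_right Rmult 1 l.

Lemma prodR_nonneg {A} (F : A -> R) l :
  (forall x, In x l -> 0 <= F x) -> 0 <= prodR (map F l).
Proof. induction l; simpl; intros; [lra|]. apply Rmult_le_pos; auto. Qed.

Lemma prodR_le {A} (F G : A -> R) l :
  (forall x, In x l -> 0 <= F x <= G x) -> prodR (map F l) <= prodR (map G l).
Proof.
  induction l as [|a l IH]; simpl; intros HFG; [lra|].
  assert (0 <= F a <= G a) by auto.
  assert (0 <= prodR (map F l)) by (apply prodR_nonneg; intros; apply HFG; auto).
  assert (prodR (map F l) <= prodR (map G l)) by auto.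
  apply Rmult_le_compat; lra.
Qed.

Lemma prodR_mul {A} (F G : A -> R) l :
  prodR (map (fun x => F x * G x) l) = prodR (map F l) * prodR (map G l).
Proof. induction l; simpl; [lra|]. rewrite IHl; ring. Qed.

Lemma prodR_const {A} c (l : list A) : prodR (map (fun _ => c) l) = c ^ length l.
Proof. induction l; simpl; [lra|]. rewrite IHl; ring. Qed.

Lemma prodR_ext {A} (f g : A -> R) l :
  (forall x, In x l -> f x = g x) -> prodR (map f l) = prodR (map g l).
Proof. intros. f_equal. apply map_ext_in. auto. Qed.

Lemma prodR_factor_neq0 {A} (F : A -> R) l x : prodR (map F l) <> 0 -> In x l -> F x <> 0.
Proof.
  induction l; simpl; intros Hnz Hx; [contradiction|].
  destruct Hx as [<-|Hx].
  - intro E. apply Hnz. rewrite E. ring.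
  - apply IHl; auto. intro E. apply Hnz. rewrite E. ring.
Qed.

Lemma prodR_delta c n a p : (a <= p < a + n)%nat ->
  prodR (map (fun x => if Nat.eqb x p then c else 1) (seq a n)) = c.
Proof.
  revert a. induction n; intros a Hp; [lia|]. simpl.
  destruct (Nat.eqb_spec a p) as [<-|Hap].
  - rewrite (prodR_ext _ (fun _ => 1)), prodR_const, pow1; [lra|].
    intros x Hx%in_seq. destruct (Nat.eqb_spec x a); [lia|]. reflexivity.
  - rewrite IHn by lia. lra.
Qed.

(** * Independent copy numbers *)

Fixpoint coord_prod (f : nat -> nat -> R) (k : list nat) : R :=
  match k with
  | nil => 1
  | a :: k' => f O a * coord_prod (fun l => f (S l)) k'
  end.

Lemma coord_prod_eq f k :
  coord_prod f k = prodR (map (fun l => f l (nth l k O)) (seq 0 (length k))).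
Proof.
  revert f. induction k; intros f; simpl; [reflexivity|].
  rewrite IHk, <- seq_shift, map_map. reflexivity.
Qed.

Lemma coord_prod_one k : coord_prod (fun _ _ => 1) k = 1.
Proof. induction k; simpl; [reflexivity|]. rewrite IHk. ring. Qed.

Definition copy_mean (rS rM : R) (Sp Mp : nat -> bool) (y : list nat) (L : nat)
  (f : nat -> nat -> R) (l : nat) : R :=
  sumR (map (fun a => rep_w rS rM Sp Mp (nth l y O) a * f l a) (seq 1 L)).

Lemma sum_cnt_w_coord_prod rS rM Sp Mp L D y f : length y = D ->
  sum_tuples (seq 1 L) D (fun k => cnt_w rS rM Sp Mp y k * coord_prod f k) =
  prodR (map (copy_mean rS rM Sp Mp y L f) (seq 0 D)).
Proof.
  revert y f. induction D; intros y f Hl.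
  - destruct y; [|discriminate]. unfold sum_tuples. simpl. lra.
  - destruct y as [|y0 y']; [discriminate|]. injection Hl as Hl.
    unfold sum_tuples in *. simpl tuples. rewrite sumR_flat_map.
    rewrite (sumR_ext _ (fun a => (rep_w rS rM Sp Mp y0 a * f O a) *
       sumR (map (fun k => cnt_w rS rM Sp Mp y' k * coord_prod (fun l => f (S l)) k)
                 (tuples (seq 1 L) D)))).
    2:{ intros a _. rewrite map_map, <- sumR_scal_l. apply sumR_ext. intros k _. simpl. ring. }
    rewrite sumR_scal_r, IHD by exact Hl.
    change (seq 0 (S D)) with (0%nat :: seq 1 D). cbn [map prodR fold_right].
    unfold copy_mean. rewrite <- (seq_shift D 0), map_map. reflexivity.
Qed.

Lemma in_tuples vals D k : In k (tuples vals D) ->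
  length k = D /\ forall x, In x k -> In x vals.
Proof.
  revert k. induction D; simpl; intros k Hk.
  - destruct Hk as [<-|[]]. split; [reflexivity|]. intros _ [].
  - apply in_flat_map in Hk as [a [Ha Hk]]. apply in_map_iff in Hk as [k' [<- Hk']].
    apply IHD in Hk' as [H1 H2]. simpl. split; [lia|]. intros x [<-|Hx]; auto.
Qed.

(** * The geometric distribution *)

Lemma pow_le_1 x n : 0 <= x <= 1 -> x ^ n <= 1.
Proof. intros. rewrite <- (pow1 n). apply pow_incr. lra. Qed.

Lemma pow_1_sub_ge x n : 0 <= x <= 1 -> 1 - INR n * x <= (1 - x) ^ n.
Proof.
  intros Hx. induction n; [simpl; lra|]. rewrite S_INR. cbn [pow].
  assert ((1 - INR n * x) * (1 - x) <= (1 - x) ^ n * (1 - x)) by (apply Rmult_le_compat_r; lra).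
  pose proof (pos_INR n). nra.
Qed.

Lemma pow_1_sub_mul_le x n : 0 <= x <= 1 -> (1 - x) ^ n * (1 + INR n * x) <= 1.
Proof.
  intros Hx. induction n; [simpl; lra|]. rewrite S_INR. cbn [pow].
  assert (0 <= (1 - x) ^ n) by (apply pow_le; lra). pose proof (pos_INR n).
  assert ((1 - x) * (1 + (INR n + 1) * x) <= 1 + INR n * x) by nra.
  assert ((1 - x) ^ n * ((1 - x) * (1 + (INR n + 1) * x)) <= (1 - x) ^ n * (1 + INR n * x))
    by (apply Rmult_le_compat_l; lra).
  nra.
Qed.

Lemma inv_bounds r : 1 <= r -> 0 < / r <= 1.
Proof.
  intros. split; [apply Rinv_0_lt_compat; lra|].
  rewrite <- Rinv_1. apply Rinv_le_contravar; lra.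
Qed.

Lemma geom_tail_le r n : 1 <= r -> (1 - / r) ^ n <= r / (r + INR n).
Proof.
  intros Hr. pose proof (inv_bounds r Hr). pose proof (pos_INR n).
  pose proof (pow_1_sub_mul_le (/ r) n ltac:(lra)) as H1.
  replace (1 + INR n * / r) with ((r + INR n) / r) in H1 by (field; lra).
  apply (Rmult_le_reg_r ((r + INR n) / r)).
  - apply Rdiv_lt_0_compat; lra.
  - replace (r / (r + INR n) * ((r + INR n) / r)) with 1 by (field; lra). lra.
Qed.

Lemma geom_tail_ge r n : 1 <= r -> 1 - INR n / r <= (1 - / r) ^ n.
Proof. intros Hr. pose proof (inv_bounds r Hr). apply pow_1_sub_ge. lra. Qed.

Lemma geom_ratio_bounds r : 1 <= r -> 0 <= 1 - / r < 1.
Proof. intros Hr. pose proof (inv_bounds r Hr). lra. Qed.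

Lemma geom_nonneg r a : 1 <= r -> 0 <= geom r a.
Proof.
  intros Hr. destruct a; simpl; [lra|]. pose proof (geom_ratio_bounds r Hr).
  pose proof (inv_bounds r Hr). apply Rmult_le_pos; [apply pow_le|]; lra.
Qed.

Lemma geom_cdf r N : 1 <= r -> sumR (map (geom r) (seq 1 N)) = 1 - (1 - / r) ^ N.
Proof.
  intros Hr. induction N; [simpl; lra|].
  rewrite seq_S, map_app, sumR_app, IHN. replace (1 + N)%nat with (S N) by lia.
  simpl. field. lra.
Qed.

Lemma geom_partial_mean r N : 1 <= r ->
  sumR (map (fun a => geom r a * INR a) (seq 1 N)) =
  r * (1 - (1 - / r) ^ N) - INR N * (1 - / r) ^ N.
Proof.
  intros Hr. induction N; [simpl; lra|].
  rewrite seq_S, map_app, sumR_app, IHN. replace (1 + N)%nat with (S N) by lia.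
  cbn [map sumR fold_right geom pow]. rewrite !S_INR. field. lra.
Qed.

Lemma geom_partial_mean_le r N : 1 <= r ->
  sumR (map (fun a => geom r a * INR a) (seq 1 N)) <= r.
Proof.
  intros Hr. rewrite geom_partial_mean by exact Hr. pose proof (geom_ratio_bounds r Hr).
  assert (0 <= (1 - / r) ^ N) by (apply pow_le; lra).
  assert ((1 - / r) ^ N <= 1) by (apply pow_le_1; lra).
  pose proof (pos_INR N). nra.
Qed.

(** The factor of [INR a0] is [Pr(a0 <= K <= N)]. *)
Lemma geom_partial_mean_ge r a0 N : 1 <= r -> (1 <= a0 <= N)%nat ->
  INR a0 * ((1 - / r) ^ (a0 - 1) - (1 - / r) ^ N) <=
  sumR (map (fun a => geom r a * INR a) (seq 1 N)).
Proof.
  intros Hr Ha.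
  replace N with ((a0 - 1) + (N - (a0 - 1)))%nat at 2 by lia.
  rewrite seq_app, map_app, sumR_app.
  assert (0 <= sumR (map (fun a => geom r a * INR a) (seq 1 (a0 - 1)))).
  { apply sumR_nonneg. intros. apply Rmult_le_pos; [apply geom_nonneg; auto|apply pos_INR]. }
  assert (Htail : sumR (map (geom r) (seq (1 + (a0 - 1)) (N - (a0 - 1)))) =
                  (1 - / r) ^ (a0 - 1) - (1 - / r) ^ N).
  { pose proof (geom_cdf r N Hr) as HN. pose proof (geom_cdf r (a0 - 1) Hr).
    replace N with ((a0 - 1) + (N - (a0 - 1)))%nat in HN at 1 by lia.
    rewrite seq_app, map_app, sumR_app in HN. lra. }
  rewrite <- Htail, <- sumR_scal_l.
  enough (sumR (map (fun x => INR a0 * geom r x) (seq (1 + (a0 - 1)) (N - (a0 - 1)))) <=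
          sumR (map (fun a => geom r a * INR a) (seq (1 + (a0 - 1)) (N - (a0 - 1))))) by lra.
  apply sumR_le. intros x Hx%in_seq. pose proof (geom_nonneg r x Hr).
  assert (INR a0 <= INR x) by (apply le_INR; lia). nra.
Qed.

Lemma sumR_truncate (F : nat -> R) L N : (N <= L)%nat ->
  sumR (map (fun a => F a * ind (Nat.leb a N)) (seq 1 L)) = sumR (map F (seq 1 N)).
Proof.
  intros HNL. replace L with (N + (L - N))%nat by lia.
  rewrite seq_app, map_app, sumR_app.
  rewrite (sumR_ext _ F), (sumR_ext (fun a => F a * ind (Nat.leb a N)) (fun _ => 0)), sumR_const.
  - lra.
  - intros x Hx%in_seq. destruct (Nat.leb_spec x N); [lia|]. unfold ind; lra.
  - intros x Hx%in_seq. destruct (Nat.leb_spec x N); [|lia]. unfold ind; lra.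
Qed.

(** * Expansions and good pairs *)

Lemma expand_cons a y b k : expand (a :: y) (b :: k) = repeat a b ++ expand y k.
Proof. reflexivity. Qed.

Lemma expand_split s y k : length y = length k -> (s < length y)%nat ->
  expand y k = expand (firstn s y) (firstn s k) ++ repeat (nth s y O) (nth s k O)
     ++ expand (skipn (S s) y) (skipn (S s) k).
Proof.
  revert y k. induction s; intros y k Hl Hs;
    destruct y as [|a y]; destruct k as [|b k]; simpl in *; try lia; [reflexivity|].
  rewrite expand_cons, (IHs y k) by lia. rewrite expand_cons, app_assoc. reflexivity.
Qed.

Lemma countb_app p l1 l2 : countb p (l1 ++ l2) = (countb p l1 + countb p l2)%nat.
Proof. unfold countb. rewrite filter_app, length_app. reflexivity. Qed.

Lemma countb_repeat p a b : countb p (repeat a b) = if p a then b else O.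
Proof.
  induction b; simpl; [destruct (p a); reflexivity|].
  unfold countb in *. simpl. destruct (p a); simpl; lia.
Qed.

Lemma countb_true l : countb (fun _ => true) l = length l.
Proof. unfold countb. rewrite filter_true. reflexivity. Qed.

Lemma INR_countb_expand p y k : length y = length k ->
  INR (countb p (expand y k)) =
  sumR (map (fun l => ind (p (nth l y O)) * INR (nth l k O)) (seq 0 (length y))).
Proof.
  revert k. induction y as [|a y IH]; intros k Hl; destruct k as [|b k]; try discriminate;
    [reflexivity|].
  injection Hl as Hl.
  rewrite expand_cons, countb_app, plus_INR, countb_repeat, IH by exact Hl.
  cbn [length seq map sumR fold_right nth]. rewrite <- seq_shift, map_map.
  destruct (p a); unfold ind; [rewrite Rmult_1_l|rewrite Rmult_0_l, Rplus_0_l, Rplus_0_l];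
    reflexivity.
Qed.

Lemma sumR_ind_nth p l :
  sumR (map (fun t => ind (p (nth t l O))) (seq 0 (length l))) = INR (countb p l).
Proof.
  unfold countb. rewrite INR_length_filter.
  induction l; simpl; [reflexivity|]. rewrite <- seq_shift, map_map, IHl. reflexivity.
Qed.

Definition good_pairs (Sp Mp : nat -> bool) (T : nat) (e : list nat) : R :=
  sumR (map (fun t => sumR (map (fun t' =>
    ind (andb (Mp (nth t e O)) (Sp (nth (t + t') e O)))) (seq 1 (30 * T)))) (seq 1 (30 * T))).

Lemma good_pairs_nonneg Sp Mp T e : 0 <= good_pairs Sp Mp T e.
Proof. apply sumR_nonneg. intros. apply sumR_nonneg. intros. apply ind_bounds. Qed.

Section PairCount.
Variables (T : nat) (Sp Mp : nat -> bool) (y k : list nat) (s : nat).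

(** Designating the M-block [i]: short first block, blocks [i] and [s] of moderate length
    and counted with their size, single copies for the other non-M blocks before [s]. *)
Definition block_factor (i l a : nat) : R :=
  if Nat.eqb l 0 then ind (Nat.leb a (4 * T)) else
  if Nat.eqb l i then INR a * ind (Nat.leb a (5 * T)) else
  if Nat.eqb l s then INR a * ind (Nat.leb a (15 * T)) else
  if andb (Nat.ltb l s) (negb (Mp (nth l y O))) then ind (Nat.eqb a 1) else 1.

Definition block_factor_cost (i j l a : nat) : R :=
  block_factor i l a * (if Nat.eqb l j then INR a / (5 * INR T) else 1).

Definition pair_count_lb : R :=
  sumR (map (fun i => ind (Mp (nth i y O)) * (coord_prod (block_factor i) k -
    sumR (map (fun j => ind (andb (Mp (nth j y O)) (negb (Nat.eqb j i))) *
      coord_prod (block_factor_cost i j) k) (seq 0 s)))) (seq 0 s)).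

Definition copies (l : nat) : R := INR (nth l k O).

Definition other_M_copies (i : nat) : R :=
  sumR (map (fun j => ind (andb (Mp (nth j y O)) (negb (Nat.eqb j i))) * copies j) (seq 0 s)).

Definition prefix_expansion : list nat := expand (firstn s y) (firstn s k).

Hypotheses (HT : (2 <= T)%nat) (Hs : (1 <= s <= T)%nat) (Hlen : length y = length k)
  (HsD : (s < length y)%nat)
  (Hk1 : forall l, (l < length k)%nat -> (1 <= nth l k O)%nat)
  (HM0 : Mp (nth 0 y O) = false) (HSs : Sp (nth s y O) = true).

Lemma copies_nonneg l : 0 <= copies l.
Proof. apply pos_INR. Qed.

Lemma other_M_copies_nonneg i : 0 <= other_M_copies i.
Proof.
  apply sumR_nonneg. intros. apply Rmult_le_pos; [apply ind_bounds|apply copies_nonneg].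
Qed.

Lemma block_factor_nonneg i l a : 0 <= block_factor i l a.
Proof.
  unfold block_factor. pose proof (pos_INR a).
  pose proof (ind_bounds (Nat.leb a (4 * T))). pose proof (ind_bounds (Nat.leb a (5 * T))).
  pose proof (ind_bounds (Nat.leb a (15 * T))). pose proof (ind_bounds (Nat.eqb a 1)).
  repeat match goal with |- context [if ?b then _ else _] => destruct b end; nra.
Qed.

Lemma coord_prod_block_factor_nonneg i : 0 <= coord_prod (block_factor i) k.
Proof. rewrite coord_prod_eq. apply prodR_nonneg. intros. apply block_factor_nonneg. Qed.

Lemma coord_prod_block_factor_le i : (0 < i < s)%nat ->
  coord_prod (block_factor i) k <= copies i * copies s.
Proof.
  intros Hi. rewrite coord_prod_eq.
  rewrite <- (prodR_delta (copies i) (length k) 0 i), <- (prodR_delta (copies s) (length k) 0 s),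
    <- prodR_mul by lia.
  apply prodR_le. intros l _. split; [apply block_factor_nonneg|].
  unfold block_factor, copies. pose proof (pos_INR (nth l k O)).
  pose proof (ind_bounds (Nat.leb (nth l k O) (4 * T))).
  pose proof (ind_bounds (Nat.leb (nth l k O) (5 * T))).
  pose proof (ind_bounds (Nat.leb (nth l k O) (15 * T))).
  pose proof (ind_bounds (Nat.eqb (nth l k O) 1)).
  destruct (Nat.eqb_spec l 0); [subst; destruct (Nat.eqb_spec 0 i), (Nat.eqb_spec 0 s); lia || lra|].
  destruct (Nat.eqb_spec l i); [subst; destruct (Nat.eqb_spec i s); [lia|nra]|].
  destruct (Nat.eqb_spec l s); [subst; nra|].
  destruct (andb _ _); lra.
Qed.

Lemma coord_prod_block_factor_cost i j : (j < length k)%nat ->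
  coord_prod (block_factor_cost i j) k = coord_prod (block_factor i) k * (copies j / (5 * INR T)).
Proof.
  intros Hj. rewrite !coord_prod_eq. unfold block_factor_cost. rewrite prodR_mul. f_equal.
  rewrite <- (prodR_delta (copies j / (5 * INR T)) (length k) 0 j) by lia.
  apply prodR_ext. intros l _. destruct (Nat.eqb_spec l j); subst; reflexivity.
Qed.

Lemma pair_count_lb_eq : pair_count_lb =
  sumR (map (fun i => ind (Mp (nth i y O)) * coord_prod (block_factor i) k *
                      (1 - other_M_copies i / (5 * INR T))) (seq 0 s)).
Proof.
  apply sumR_ext. intros i _. unfold other_M_copies.
  rewrite (sumR_ext _ (fun j => coord_prod (block_factor i) k / (5 * INR T) *
     (ind (andb (Mp (nth j y O)) (negb (Nat.eqb j i))) * copies j))).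
  - rewrite sumR_scal_l. unfold Rdiv. ring.
  - intros j Hj%in_seq. rewrite coord_prod_block_factor_cost by lia. unfold Rdiv. ring.
Qed.

Lemma coord_prod_block_factor_neq0 i : (0 < i < s)%nat -> coord_prod (block_factor i) k <> 0 ->
  (nth 0 k O <= 4 * T)%nat /\ (nth i k O <= 5 * T)%nat /\ (nth s k O <= 15 * T)%nat /\
  (forall l, (0 < l < s)%nat -> Mp (nth l y O) = false -> l <> i -> nth l k O = 1%nat).
Proof.
  intros Hi Hnz. rewrite coord_prod_eq in Hnz.
  assert (G : forall l, (l < length k)%nat -> block_factor i l (nth l k O) <> 0).
  { intros l Hl. apply (prodR_factor_neq0 _ _ l Hnz). apply in_seq; lia. }
  assert (Hind : forall x b, x * ind b <> 0 -> b = true) by (intros x [|]; unfold ind; auto; lra).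
  unfold block_factor in G. split; [|split; [|split]].
  - specialize (G 0%nat ltac:(lia)). simpl in G. apply Nat.leb_le.
    destruct (Nat.leb _ _); [reflexivity|]. unfold ind in G. lra.
  - specialize (G i ltac:(lia)). destruct (Nat.eqb_spec i 0); [lia|].
    rewrite Nat.eqb_refl in G. apply Nat.leb_le, (Hind _ _ G).
  - specialize (G s ltac:(lia)). destruct (Nat.eqb_spec s 0); [lia|].
    destruct (Nat.eqb_spec s i); [lia|]. rewrite Nat.eqb_refl in G. apply Nat.leb_le, (Hind _ _ G).
  - intros l Hl HM Hli. specialize (G l ltac:(lia)).
    destruct (Nat.eqb_spec l 0); [lia|]. destruct (Nat.eqb_spec l i); [lia|].
    destruct (Nat.eqb_spec l s); [lia|]. destruct (Nat.ltb_spec l s); [|lia].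
    rewrite HM in G. simpl in G. apply Nat.eqb_eq.
    destruct (Nat.eqb _ _); [reflexivity|]. unfold ind in G. lra.
Qed.

Lemma INR_countb_prefix (p : nat -> bool) :
  INR (countb p prefix_expansion) = sumR (map (fun l => ind (p (nth l y O)) * copies l) (seq 0 s)).
Proof.
  unfold prefix_expansion. rewrite INR_countb_expand by (rewrite !length_firstn; lia).
  rewrite length_firstn. replace (Init.Nat.min s (length y)) with s by lia.
  apply sumR_ext. intros l Hl%in_seq. unfold copies. rewrite !nth_firstn.
  destruct (Nat.ltb_spec l s); [reflexivity|lia].
Qed.

Lemma INR_length_prefix : INR (length prefix_expansion) = sumR (map copies (seq 0 s)).
Proof.
  rewrite <- countb_true, INR_countb_prefix. apply sumR_ext. intros. unfold ind. lra.
Qed.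

Lemma expand_eq_prefix : expand y k = prefix_expansion ++ repeat (nth s y O) (nth s k O)
     ++ expand (skipn (S s) y) (skipn (S s) k).
Proof. apply expand_split; assumption. Qed.

Lemma prefix_expansion_nonempty : (1 <= length prefix_expansion)%nat.
Proof.
  apply INR_le. rewrite INR_length_prefix.
  replace s with (1 + (s - 1))%nat by lia. rewrite seq_app, map_app, sumR_app.
  assert (1 <= copies 0) by (apply (le_INR 1), Hk1; lia).
  assert (0 <= sumR (map copies (seq (0 + 1) (s - 1))))
    by (apply sumR_nonneg; intros; apply copies_nonneg).
  simpl in *. lra.
Qed.

Lemma nth_expand_prefix t : (t < length prefix_expansion)%nat ->
  nth t (expand y k) O = nth t prefix_expansion O.
Proof. intros Ht. rewrite expand_eq_prefix, app_nth1 by exact Ht. reflexivity. Qed.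

(** From any position [t] inside the prefix, the whole block of [y_s] lies within [30T]. *)
Lemma S_hits_after_prefix_ge t : (1 <= t < length prefix_expansion)%nat ->
  (length prefix_expansion <= 15 * T)%nat -> (nth s k O <= 15 * T)%nat ->
  copies s <= sumR (map (fun t' => ind (Sp (nth (t + t') (expand y k) O))) (seq 1 (30 * T))).
Proof.
  intros Ht HA HKs. set (A := length prefix_expansion) in *. set (b := nth s k O) in *.
  replace (30 * T)%nat with ((A - t - 1) + (b + (30 * T - (A - t - 1) - b)))%nat by lia.
  rewrite !seq_app.
  eapply Rle_trans; [|apply sumR_app_ge_r; intros; apply ind_bounds].
  eapply Rle_trans; [|apply sumR_app_ge_l; intros; apply ind_bounds].
  rewrite (sumR_ext _ (fun _ => 1)), sumR_const, length_seq; [unfold copies; fold b; lra|].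
  intros t' Ht'%in_seq. rewrite expand_eq_prefix.
  rewrite app_nth2 by (fold A; lia). fold A.
  rewrite app_nth1 by (rewrite repeat_length; lia).
  rewrite nth_repeat_lt by lia. rewrite HSs. reflexivity.
Qed.

Lemma good_pairs_ge_copies : (length prefix_expansion <= 15 * T)%nat ->
  (nth s k O <= 15 * T)%nat ->
  copies s * sumR (map (fun l => ind (Mp (nth l y O)) * copies l) (seq 0 s)) <=
  good_pairs Sp Mp T (expand y k).
Proof.
  intros HA HKs. set (A := length prefix_expansion) in *.
  pose proof prefix_expansion_nonempty as HA1. fold A in HA1.
  unfold good_pairs.
  rewrite (sumR_ext (fun t => sumR (map (fun t' => ind (andb (Mp (nth t (expand y k) O))
     (Sp (nth (t + t') (expand y k) O)))) (seq 1 (30 * T)))) (fun t => ind (Mp (nth t (expand y k) O)) *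
     sumR (map (fun t' => ind (Sp (nth (t + t') (expand y k) O))) (seq 1 (30 * T))))).
  2:{ intros t _. rewrite <- sumR_scal_l. apply sumR_ext. intros. apply ind_andb. }
  eapply Rle_trans; [|apply (sumR_seq_prefix_le _ _ (A - 1)); [lia|]].
  2:{ intros. apply Rmult_le_pos; [apply ind_bounds|apply sumR_nonneg; intros; apply ind_bounds]. }
  eapply Rle_trans; [|apply (sumR_le (fun t => ind (Mp (nth t (expand y k) O)) * copies s))].
  2:{ intros t Ht%in_seq. apply Rmult_le_compat_l; [apply ind_bounds|].
      apply S_hits_after_prefix_ge; fold A; lia. }
  rewrite sumR_scal_r, (Rmult_comm (copies s)). apply Rmult_le_compat_r; [apply copies_nonneg|].
  rewrite <- INR_countb_prefix, <- sumR_ind_nth. fold A.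
  replace A with (1 + (A - 1))%nat at 1 by lia. rewrite seq_app. simpl.
  rewrite (sumR_ext (fun t => ind (Mp (nth t prefix_expansion O)))
                    (fun t => ind (Mp (nth t (expand y k) O)))).
  - rewrite <- (nth_expand_prefix 0) by lia.
    rewrite (expand_split 0) by lia. simpl.
    rewrite app_nth1 by (rewrite repeat_length; apply Hk1; lia).
    rewrite nth_repeat_lt by (apply Hk1; lia). rewrite HM0. unfold ind at 1. lra.
  - intros t Ht%in_seq. rewrite nth_expand_prefix by lia. reflexivity.
Qed.

(** On the support of [block_factor i] every non-M block before [s] other than [0] and [i]
    is a single copy, so the prefix is short unless the other M-blocks are long. *)
Lemma length_prefix_le i : (0 < i < s)%nat -> coord_prod (block_factor i) k <> 0 ->
  INR (length prefix_expansion) <= 10 * INR T + other_M_copies i.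
Proof.
  intros Hi Hnz. destruct (coord_prod_block_factor_neq0 i Hi Hnz) as [H0 [Hi5 [_ Hone]]].
  rewrite INR_length_prefix.
  eapply Rle_trans.
  - apply (sumR_le _ (fun l => ind (Nat.eqb l 0) * copies l + ind (Nat.eqb l i) * copies l +
       ind (andb (Mp (nth l y O)) (negb (Nat.eqb l i))) * copies l + 1)).
    intros l Hl%in_seq. pose proof (copies_nonneg l).
    destruct (Nat.eqb_spec l 0) as [->|Hl0].
    { destruct (Nat.eqb_spec 0 i); [lia|]. unfold ind; simpl.
      destruct (Mp _); simpl; lra. }
    destruct (Nat.eqb_spec l i) as [->|Hli].
    { destruct (Nat.eqb_spec i 0); [lia|]. unfold ind; simpl.
      rewrite Bool.andb_false_r. lra. }
    destruct (Mp (nth l y O)) eqn:HMl; unfold ind; simpl; [lra|].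
    unfold copies. rewrite (Hone l ltac:(lia) HMl Hli). simpl. lra.
  - rewrite !sumR_add, !sumR_delta, sumR_const, length_seq by lia. fold (other_M_copies i).
    apply le_INR in H0, Hi5. rewrite mult_INR in H0, Hi5. simpl in H0, Hi5.
    assert (INR s <= INR T) by (apply le_INR; lia). unfold copies. lra.
Qed.

Lemma pair_lb_term_nonpos i : (0 < i < s)%nat ->
  (15 * T < length prefix_expansion \/ 15 * T < nth s k O)%nat ->
  coord_prod (block_factor i) k * (1 - other_M_copies i / (5 * INR T)) <= 0.
Proof.
  intros Hi Hlong. pose proof (coord_prod_block_factor_nonneg i).
  destruct (Req_dec (coord_prod (block_factor i) k) 0) as [Z|Hnz]; [rewrite Z; lra|].
  destruct (coord_prod_block_factor_neq0 i Hi Hnz) as [_ [_ [HKs _]]].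
  destruct Hlong as [HA|]; [|lia].
  pose proof (length_prefix_le i Hi Hnz).
  apply lt_INR in HA. rewrite mult_INR in HA. simpl in HA.
  assert (HTr : 2 <= INR T) by (apply (le_INR 2); lia).
  assert (1 < other_M_copies i / (5 * INR T)).
  { apply (Rmult_lt_reg_r (5 * INR T)); [lra|]. unfold Rdiv.
    rewrite Rmult_assoc, Rinv_l by lra. lra. }
  nra.
Qed.

(** If the prefix and the block of [y_s] have length at most [15T], each term is at most
    [k_i k_s]; otherwise [length_prefix_le] forces [other_M_copies i > 5T] wherever
    [block_factor i] does not vanish, so each term is nonpositive. *)
Lemma good_pairs_ge_pair_count_lb : pair_count_lb <= good_pairs Sp Mp T (expand y k).
Proof.
  rewrite pair_count_lb_eq.
  assert (HTr : 2 <= INR T) by (apply (le_INR 2); lia).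
  assert (Hcase : ((length prefix_expansion <= 15 * T /\ nth s k O <= 15 * T) \/
                  (15 * T < length prefix_expansion \/ 15 * T < nth s k O))%nat) by lia.
  destruct Hcase as [[HA HK]|Hlong].
  - eapply Rle_trans; [|apply good_pairs_ge_copies; assumption].
    rewrite <- sumR_scal_l. apply sumR_le. intros i Hi%in_seq.
    pose proof (coord_prod_block_factor_nonneg i). pose proof (other_M_copies_nonneg i).
    pose proof (copies_nonneg i). pose proof (copies_nonneg s).
    assert (0 <= other_M_copies i / (5 * INR T)) by (apply Rdiv_nonneg; lra).
    destruct (Mp (nth i y O)) eqn:HMi; unfold ind; [|nra].
    assert (i <> 0%nat) by (intros ->; congruence).
    pose proof (coord_prod_block_factor_le i ltac:(lia)). nra.
  - eapply Rle_trans; [|apply good_pairs_nonneg].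
    rewrite <- (Rmult_0_r (INR (length (seq 0 s)))), <- sumR_const.
    apply sumR_le. intros i Hi%in_seq.
    destruct (Mp (nth i y O)) eqn:HMi; unfold ind; [|lra].
    assert (i <> 0%nat) by (intros ->; congruence).
    pose proof (pair_lb_term_nonpos i ltac:(lia) Hlong). lra.
Qed.

End PairCount.

Lemma rep_w_nonneg rS rM Sp Mp x a : 1 <= rS -> 1 <= rM -> 0 <= rep_w rS rM Sp Mp x a.
Proof.
  intros. unfold rep_w. destruct (Sp x); [apply geom_nonneg; auto|].
  destruct (Mp x); [apply geom_nonneg; auto|]. apply ind_bounds.
Qed.

Lemma cnt_w_nonneg rS rM Sp Mp y k : 1 <= rS -> 1 <= rM -> 0 <= cnt_w rS rM Sp Mp y k.
Proof.
  intros. revert k. induction y; intros k; destruct k; simpl; try lra.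
  apply Rmult_le_pos; [apply rep_w_nonneg|apply IHy]; auto.
Qed.

Lemma rep_w_mass_bounds rS rM Sp Mp x L : 1 <= rS -> 1 <= rM -> (1 <= L)%nat ->
  1 - Rmax rS rM / INR L <= sumR (map (rep_w rS rM Sp Mp x) (seq 1 L)) <= 1.
Proof.
  intros HrS HrM HL. set (d := Rmax rS rM / INR L).
  assert (HLr : 1 <= INR L) by (apply (le_INR 1); auto).
  assert (Hd : 0 <= d) by (apply Rdiv_nonneg; pose proof (Rmax_l rS rM); lra).
  assert (Hgeom : forall r, 1 <= r -> r <= Rmax rS rM -> 1 - d <= 1 - (1 - / r) ^ L <= 1).
  { intros r Hr Hrm. pose proof (geom_tail_le r L Hr). pose proof (geom_ratio_bounds r Hr).
    pose proof (pow_le (1 - / r) L ltac:(lra)).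
    assert (r / (r + INR L) <= Rmax rS rM / INR L).
    { unfold Rdiv. apply Rmult_le_compat; [lra|left; apply Rinv_0_lt_compat; lra|lra|].
      apply Rinv_le_contravar; lra. }
    unfold d. lra. }
  unfold rep_w. destruct (Sp x); [rewrite geom_cdf by auto; apply Hgeom, Rmax_l; auto|].
  destruct (Mp x); [rewrite geom_cdf by auto; apply Hgeom, Rmax_r; auto|].
  rewrite (sumR_ext _ (fun a => ind (Nat.eqb a 1) * 1)), sumR_delta by (intros; ring || lia).
  lra.
Qed.

Lemma sum_cnt_w_le_1 rS rM Sp Mp L D y : 1 <= rS -> 1 <= rM -> length y = D ->
  sum_tuples (seq 1 L) D (fun k => cnt_w rS rM Sp Mp y k) <= 1.
Proof.
  intros HrS HrM Hy. unfold sum_tuples.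
  rewrite (sumR_ext _ (fun k => cnt_w rS rM Sp Mp y k * coord_prod (fun _ _ => 1) k))
    by (intros; rewrite coord_prod_one; ring).
  fold (sum_tuples (seq 1 L) D (fun k => cnt_w rS rM Sp Mp y k * coord_prod (fun _ _ => 1) k)).
  rewrite sum_cnt_w_coord_prod by exact Hy.
  apply Rle_trans with (prodR (map (fun _ => 1) (seq 0 D)));
    [|rewrite prodR_const, pow1; lra].
  apply prodR_le. intros l _.
  unfold copy_mean. rewrite (sumR_ext _ (rep_w rS rM Sp Mp (nth l y O))) by (intros; cbv beta; ring).
  split; [apply sumR_nonneg; intros; apply rep_w_nonneg; auto|].
  destruct L as [|L]; [simpl; lra|]. apply (rep_w_mass_bounds rS rM Sp Mp _ (S L)); auto; lia.
Qed.

(** Truncated versions of [Pr(K <= N)] and [E[K; K <= N]] for [K ~ Geom(1/r)]. *)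
Definition trunc_geom_mass (r : R) (N L : nat) : R :=
  sumR (map (fun a => geom r a * ind (Nat.leb a N)) (seq 1 L)).

Definition trunc_geom_mean (r : R) (N L : nat) : R :=
  sumR (map (fun a => geom r a * (INR a * ind (Nat.leb a N))) (seq 1 L)).

Lemma trunc_geom_mass_nonneg r N L : 1 <= r -> 0 <= trunc_geom_mass r N L.
Proof.
  intros. apply sumR_nonneg. intros. apply Rmult_le_pos; [apply geom_nonneg; auto|apply ind_bounds].
Qed.

Lemma trunc_geom_mean_nonneg r N L : 1 <= r -> 0 <= trunc_geom_mean r N L.
Proof.
  intros. apply sumR_nonneg. intros.
  apply Rmult_le_pos; [apply geom_nonneg; auto|apply Rmult_le_pos; [apply pos_INR|apply ind_bounds]].
Qed.

Lemma trunc_geom_mass_ge r N L : 1 <= r -> (N <= L)%nat ->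
  INR N / (r + INR N) <= trunc_geom_mass r N L.
Proof.
  intros Hr HNL. unfold trunc_geom_mass. rewrite sumR_truncate, geom_cdf by auto.
  pose proof (geom_tail_le r N Hr). pose proof (pos_INR N).
  replace (INR N / (r + INR N)) with (1 - r / (r + INR N)) by (field; lra). lra.
Qed.

(** Keep only [K >= a0] with [a0] about [r / 2]. *)
Lemma trunc_geom_mean_ge r a0 N L : 1 <= r -> (1 <= a0 <= N)%nat -> (N <= L)%nat ->
  r / 2 <= INR a0 -> INR (a0 - 1) <= r / 2 ->
  r / 2 * (1 / 2 - r / (r + INR N)) <= trunc_geom_mean r N L.
Proof.
  intros Hr Ha0 HNL Hlo Hhi. unfold trunc_geom_mean.
  rewrite (sumR_ext _ (fun a => (geom r a * INR a) * ind (Nat.leb a N))) by (intros; ring).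
  rewrite sumR_truncate by exact HNL.
  eapply Rle_trans; [|apply (geom_partial_mean_ge r a0); auto].
  pose proof (geom_tail_ge r (a0 - 1) Hr). pose proof (geom_tail_le r N Hr).
  assert (INR (a0 - 1) / r <= 1 / 2).
  { apply (Rmult_le_reg_r r); [lra|]. unfold Rdiv at 1. rewrite Rmult_assoc, Rinv_l by lra. lra. }
  destruct (Rle_lt_dec (1 / 2) (r / (r + INR N))); [|apply Rmult_le_compat; lra].
  assert (0 <= INR a0 * ((1 - / r) ^ (a0 - 1) - (1 - / r) ^ N)).
  { apply Rmult_le_pos; [apply pos_INR|]. rewrite <- (Nat.sub_add (a0 - 1) N), pow_add by lia.
    pose proof (geom_ratio_bounds r Hr). pose proof (pow_le (1 - / r) (a0 - 1) ltac:(lra)).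
    pose proof (pow_le_1 (1 - / r) (N - (a0 - 1)) ltac:(lra)). nra. }
  nra.
Qed.

Lemma INR_div_bounds m q : (0 < q)%nat ->
  INR m / INR q - 1 < INR (m / q) <= INR m / INR q.
Proof.
  intros Hq. assert (Hqr : 0 < INR q) by (apply lt_0_INR; lia).
  pose proof (Nat.div_mod m q ltac:(lia)) as Hdm. pose proof (Nat.mod_upper_bound m q ltac:(lia)).
  apply (f_equal INR) in Hdm. rewrite plus_INR, mult_INR in Hdm.
  assert (INR (m mod q) < INR q) by (apply lt_INR; lia). pose proof (pos_INR (m mod q)).
  replace (INR m / INR q) with (INR (m / q) + INR (m mod q) / INR q) by (rewrite Hdm; field; lra).
  assert (0 <= INR (m mod q) / INR q) by (apply Rdiv_nonneg; lra).
  assert (INR (m mod q) / INR q < 1).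
  { apply (Rmult_lt_reg_r (INR q)); [lra|]. unfold Rdiv. rewrite Rmult_assoc, Rinv_l by lra. lra. }
  lra.
Qed.

(** * Means of the block factors *)

Definition M_count (Mp : nat -> bool) (y : list nat) (s : nat) : nat :=
  length (filter (fun l => Mp (nth l y O)) (seq 0 s)).

Lemma sumR_ind_M_count Mp y s :
  sumR (map (fun j => ind (Mp (nth j y O))) (seq 0 s)) = INR (M_count Mp y s).
Proof. unfold M_count. rewrite INR_length_filter. reflexivity. Qed.

Section BlockFactorMeans.
Variables (T : nat) (Sp Mp : nat -> bool) (y : list nat) (s L : nat) (rS rM : R).
Hypotheses (HT : (2 <= T)%nat) (Hs : (1 <= s <= T)%nat) (HsD : (s < length y)%nat)
  (HL : (15 * T <= L)%nat) (HrS : 1 <= rS) (HrM : 1 <= rM)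
  (HS0 : Sp (nth 0 y O) = true) (HM0 : Mp (nth 0 y O) = false) (HSs : Sp (nth s y O) = true)
  (HSl : forall l, (1 <= l < s)%nat -> Sp (nth l y O) = false).

Let mean := copy_mean rS rM Sp Mp y L.
Let d := Rmax rS rM / INR L.

Let HL1 : (1 <= L)%nat. Proof. lia. Qed.

Lemma trunc_loss_nonneg : 0 <= d.
Proof. apply Rdiv_nonneg; [pose proof (Rmax_l rS rM); lra|apply lt_0_INR; lia]. Qed.

Lemma copy_mean_bounds f l : (forall a, 0 <= f l a <= 1) -> 0 <= mean f l <= 1.
Proof.
  intros Hf. unfold mean, copy_mean.
  pose proof (rep_w_mass_bounds rS rM Sp Mp (nth l y O) L HrS HrM HL1) as [_ Hle].
  split.
  - apply sumR_nonneg. intros a _. apply Rmult_le_pos; [apply rep_w_nonneg; auto|apply Hf].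
  - eapply Rle_trans; [|apply Hle]. apply sumR_le. intros a _.
    pose proof (rep_w_nonneg rS rM Sp Mp (nth l y O) a HrS HrM). specialize (Hf a). nra.
Qed.

Lemma copy_mean_one_ge f l : (forall a, f l a = 1) -> 1 - d <= mean f l.
Proof.
  intros Hf. unfold mean, copy_mean.
  rewrite (sumR_ext _ (rep_w rS rM Sp Mp (nth l y O))) by (intros; rewrite Hf; ring).
  apply rep_w_mass_bounds; auto.
Qed.

Lemma copy_mean_single f l : (forall a, f l a = ind (Nat.eqb a 1)) ->
  Sp (nth l y O) = false -> Mp (nth l y O) = false -> mean f l = 1.
Proof.
  intros Hf HSl' HMl. unfold mean, copy_mean.
  rewrite (sumR_ext _ (fun a => ind (Nat.eqb a 1) * rep_w rS rM Sp Mp (nth l y O) a))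
    by (intros; rewrite Hf; ring).
  rewrite sumR_delta by lia. unfold rep_w. rewrite HSl', HMl. reflexivity.
Qed.

Definition block_means : R :=
  trunc_geom_mass rS (4 * T) L * trunc_geom_mean rM (5 * T) L * trunc_geom_mean rS (15 * T) L.

Lemma block_means_nonneg : 0 <= block_means.
Proof.
  unfold block_means. pose proof (trunc_geom_mass_nonneg rS (4 * T) L HrS).
  pose proof (trunc_geom_mean_nonneg rM (5 * T) L HrM).
  pose proof (trunc_geom_mean_nonneg rS (15 * T) L HrS).
  repeat apply Rmult_le_pos; assumption.
Qed.

Section DesignatedBlocks.
Variable i : nat.
Hypotheses (Hi : (0 < i < s)%nat) (HMi : Mp (nth i y O) = true).

Let bf := block_factor T Mp y s i.

Lemma mean_block_factor_0 : mean bf 0 = trunc_geom_mass rS (4 * T) L.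
Proof. unfold mean, copy_mean, rep_w. rewrite HS0. reflexivity. Qed.

Lemma mean_block_factor_i : mean bf i = trunc_geom_mean rM (5 * T) L.
Proof.
  unfold mean, copy_mean, rep_w. rewrite HSl, HMi by lia. apply sumR_ext. intros a _.
  unfold bf, block_factor. destruct (Nat.eqb_spec i 0); [lia|]. rewrite Nat.eqb_refl. reflexivity.
Qed.

Lemma mean_block_factor_s : mean bf s = trunc_geom_mean rS (15 * T) L.
Proof.
  unfold mean, copy_mean, rep_w. rewrite HSs. apply sumR_ext. intros a _.
  unfold bf, block_factor. destruct (Nat.eqb_spec s 0); [lia|].
  destruct (Nat.eqb_spec s i); [lia|]. rewrite Nat.eqb_refl. reflexivity.
Qed.

Lemma block_factor_other l a : l <> 0%nat -> l <> i -> l <> s ->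
  bf l a = if andb (Nat.ltb l s) (negb (Mp (nth l y O))) then ind (Nat.eqb a 1) else 1.
Proof.
  intros. unfold bf, block_factor. destruct (Nat.eqb_spec l 0); [lia|].
  destruct (Nat.eqb_spec l i); [lia|]. destruct (Nat.eqb_spec l s); [lia|]. reflexivity.
Qed.

Lemma mean_block_factor_other_ge l : l <> 0%nat -> l <> i -> l <> s -> 1 - d <= mean bf l.
Proof.
  intros H0 Hli Hls.
  pose proof trunc_loss_nonneg.
  destruct (andb (Nat.ltb l s) (negb (Mp (nth l y O)))) eqn:Hcase.
  - rewrite copy_mean_single; [lra| | |].
    + intros a. rewrite block_factor_other, Hcase by assumption. reflexivity.
    + apply andb_prop in Hcase as [Hlt%Nat.ltb_lt _]. apply HSl. lia.
    + apply andb_prop in Hcase as [_ HMl%Bool.negb_true_iff]. exact HMl.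
  - apply copy_mean_one_ge. intros a. rewrite block_factor_other, Hcase by assumption.
    reflexivity.
Qed.

Lemma prod_mean_block_factor_ge : d <= 1 ->
  (1 - d) ^ length y * block_means <= prodR (map (mean bf) (seq 0 (length y))).
Proof.
  intros Hd. unfold block_means.
  pose proof trunc_loss_nonneg.
  pose proof (trunc_geom_mass_nonneg rS (4 * T) L HrS).
  pose proof (trunc_geom_mean_nonneg rM (5 * T) L HrM).
  pose proof (trunc_geom_mean_nonneg rS (15 * T) L HrS).
  set (G0 := trunc_geom_mass rS (4 * T) L) in *.
  set (GM := trunc_geom_mean rM (5 * T) L) in *.
  set (GS := trunc_geom_mean rS (15 * T) L) in *.
  replace ((1 - d) ^ length y * (G0 * GM * GS)) with (prodR (map (fun l => (1 - d) *
     ((if Nat.eqb l 0 then G0 else 1) * (if Nat.eqb l i then GM else 1) *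
      (if Nat.eqb l s then GS else 1))) (seq 0 (length y)))).
  2:{ rewrite !prodR_mul, prodR_const, length_seq, !prodR_delta by lia. reflexivity. }
  apply prodR_le. intros l _.
  destruct (Nat.eqb_spec l 0) as [->|Hl0]; [|destruct (Nat.eqb_spec l i) as [->|Hli];
    [|destruct (Nat.eqb_spec l s) as [->|Hls]]].
  - destruct (Nat.eqb_spec 0 i), (Nat.eqb_spec 0 s); try lia.
    rewrite mean_block_factor_0; fold G0. split; nra.
  - destruct (Nat.eqb_spec i s); [lia|]. rewrite mean_block_factor_i; fold GM. split; nra.
  - rewrite mean_block_factor_s; fold GS. split; nra.
  - pose proof (mean_block_factor_other_ge l Hl0 Hli Hls). split; nra.
Qed.

Variable j : nat.
Hypotheses (Hj : (j < s)%nat) (HMj : Mp (nth j y O) = true) (Hji : j <> i).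

Let bfc := block_factor_cost T Mp y s i j.

Lemma mean_block_factor_cost_j : mean bfc j <= rM / (5 * INR T).
Proof.
  assert (Hj0 : j <> 0%nat) by (intros ->; congruence).
  assert (HTr : 0 < 5 * INR T) by (apply Rmult_lt_0_compat; [lra|apply lt_0_INR; lia]).
  unfold mean, copy_mean.
  rewrite (sumR_ext _ (fun a => (geom rM a * INR a) * / (5 * INR T))).
  - rewrite sumR_scal_r. pose proof (geom_partial_mean_le rM L HrM).
    pose proof (Rinv_0_lt_compat _ HTr). unfold Rdiv. nra.
  - intros a _. unfold rep_w, bfc, block_factor_cost.
    rewrite HSl, HMj, block_factor_other, HMj, Nat.eqb_refl by lia.
    destruct (Nat.ltb j s); simpl; unfold Rdiv; ring.
Qed.

Lemma mean_block_factor_cost_other l : l <> j -> mean bfc l = mean bf l.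
Proof.
  intros Hlj. unfold mean, copy_mean, bfc, block_factor_cost. apply sumR_ext. intros a _.
  destruct (Nat.eqb_spec l j); [lia|]. unfold bf. ring.
Qed.

Lemma prod_mean_block_factor_cost_le :
  prodR (map (mean bfc) (seq 0 (length y))) <= block_means * (rM / (5 * INR T)).
Proof.
  unfold block_means.
  pose proof (trunc_geom_mass_nonneg rS (4 * T) L HrS) as H0.
  pose proof (trunc_geom_mean_nonneg rM (5 * T) L HrM) as Hi'.
  pose proof (trunc_geom_mean_nonneg rS (15 * T) L HrS) as Hs'.
  set (G0 := trunc_geom_mass rS (4 * T) L) in *.
  set (GM := trunc_geom_mean rM (5 * T) L) in *.
  set (GS := trunc_geom_mean rS (15 * T) L) in *.
  assert (Hj0 : j <> 0%nat) by (intros ->; congruence).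
  replace (G0 * GM * GS * (rM / (5 * INR T))) with (prodR (map (fun l =>
     (if Nat.eqb l 0 then G0 else 1) * (if Nat.eqb l i then GM else 1) *
     (if Nat.eqb l s then GS else 1) * (if Nat.eqb l j then rM / (5 * INR T) else 1))
     (seq 0 (length y)))).
  2:{ rewrite !prodR_mul, !prodR_delta by lia. reflexivity. }
  apply prodR_le. intros l _.
  assert (Hnn : 0 <= mean bfc l).
  { apply sumR_nonneg. intros a _. apply Rmult_le_pos; [apply rep_w_nonneg; auto|].
    unfold bfc, block_factor_cost. apply Rmult_le_pos; [apply block_factor_nonneg|].
    destruct (Nat.eqb l j); [|lra]. apply Rdiv_nonneg; [apply pos_INR|].
    apply Rmult_lt_0_compat; [lra|apply lt_0_INR; lia]. }
  split; [exact Hnn|].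
  destruct (Nat.eqb_spec l j) as [->|Hlj].
  - destruct (Nat.eqb_spec j 0), (Nat.eqb_spec j i), (Nat.eqb_spec j s); try lia.
    pose proof mean_block_factor_cost_j. lra.
  - rewrite mean_block_factor_cost_other by exact Hlj.
    destruct (Nat.eqb_spec l 0) as [->|Hl0].
    { destruct (Nat.eqb_spec 0 i), (Nat.eqb_spec 0 s); try lia.
      rewrite mean_block_factor_0; fold G0. lra. }
    destruct (Nat.eqb_spec l i) as [->|Hli].
    { destruct (Nat.eqb_spec i s); [lia|]. rewrite mean_block_factor_i; fold GM. lra. }
    destruct (Nat.eqb_spec l s) as [->|Hls].
    { rewrite mean_block_factor_s; fold GS. lra. }
    assert (0 <= mean bf l <= 1).
    { apply copy_mean_bounds. intros a. rewrite block_factor_other by assumption.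
      destruct (andb _ _); [apply ind_bounds|lra]. }
    lra.
Qed.

End DesignatedBlocks.

Lemma expect_pair_count_lb_ge : d <= 1 ->
  INR (M_count Mp y s) * block_means *
    ((1 - d) ^ length y - INR (M_count Mp y s) * rM / (5 * INR T)) <=
  sum_tuples (seq 1 L) (length y)
    (fun k => cnt_w rS rM Sp Mp y k * pair_count_lb T Mp y k s).
Proof.
  intros Hd. pose proof block_means_nonneg as HX.
  assert (HTr : 0 < 5 * INR T) by (apply Rmult_lt_0_compat; [lra|apply lt_0_INR; lia]).
  assert (Hc : 0 <= rM / (5 * INR T)) by (apply Rdiv_nonneg; lra).
  set (D := length y). set (m := M_count Mp y s).
  pose proof (fun f => sum_cnt_w_coord_prod rS rM Sp Mp L D y f eq_refl) as Hprod.
  unfold sum_tuples in *. unfold pair_count_lb. rewrite sumR_linear_incl_excl.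
  replace (INR m * block_means * ((1 - d) ^ D - INR m * rM / (5 * INR T))) with
    (sumR (map (fun i => ind (Mp (nth i y O)) *
      (block_means * (1 - d) ^ D - sumR (map (fun j => ind (Mp (nth j y O)) *
         (block_means * (rM / (5 * INR T)))) (seq 0 s)))) (seq 0 s))).
  2:{ rewrite (sumR_ext _ (fun i => ind (Mp (nth i y O)) *
        (block_means * (1 - d) ^ D - INR m * (block_means * (rM / (5 * INR T)))))).
      - rewrite sumR_scal_r, sumR_ind_M_count. fold m. unfold Rdiv. ring.
      - intros i _. rewrite sumR_scal_r, sumR_ind_M_count. reflexivity. }
  apply sumR_le. intros i Hi%in_seq.
  destruct (Mp (nth i y O)) eqn:HMi; unfold ind at 1 3; [|lra]. rewrite !Rmult_1_l.
  assert (Hi0 : i <> 0%nat) by (intros ->; congruence).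
  rewrite Hprod.
  pose proof (prod_mean_block_factor_ge i ltac:(lia) HMi Hd) as Hlb. fold D in Hlb. unfold mean in Hlb.
  enough (sumR (map (fun j => ind (Mp (nth j y O) && negb (Nat.eqb j i)) *
            sumR (map (fun k => cnt_w rS rM Sp Mp y k * coord_prod
              (block_factor_cost T Mp y s i j) k) (tuples (seq 1 L) D))) (seq 0 s)) <=
          sumR (map (fun j => ind (Mp (nth j y O)) * (block_means * (rM / (5 * INR T))))
            (seq 0 s))) by lra.
  apply sumR_le. intros j Hj%in_seq.
  assert (0 <= block_means * (rM / (5 * INR T))) by (apply Rmult_le_pos; assumption).
  destruct (Mp (nth j y O)) eqn:HMj; [|unfold ind; simpl; lra].
  destruct (Nat.eqb_spec j i) as [->|Hji]; unfold ind; simpl; [lra|].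
  rewrite !Rmult_1_l, Hprod.
  apply (prod_mean_block_factor_cost_le i ltac:(lia) HMi j ltac:(lia) HMj Hji).
Qed.

End BlockFactorMeans.

(** * The bound for a single path *)

Lemma first_block_mass_ge T L : (2 <= T)%nat -> (4 * T <= L)%nat ->
  8 / 9 <= trunc_geom_mass (INR T / 2) (4 * T) L.
Proof.
  intros HT HL. assert (HTr : 2 <= INR T) by (apply (le_INR 2); lia).
  eapply Rle_trans; [|apply trunc_geom_mass_ge; [lra|exact HL]].
  rewrite mult_INR. replace (INR 4) with 4 by (rewrite INR_IZR_INZ; reflexivity).
  right. field. lra.
Qed.

Lemma S_block_mean_ge T L : (2 <= T)%nat -> (15 * T <= L)%nat ->
  INR T / 9 <= trunc_geom_mean (INR T / 2) (15 * T) L.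
Proof.
  intros HT HL. assert (HTr : 2 <= INR T) by (apply (le_INR 2); lia).
  pose proof (INR_div_bounds T 4 ltac:(lia)) as Hdiv.
  replace (INR 4) with 4 in Hdiv by (rewrite INR_IZR_INZ; reflexivity).
  eapply Rle_trans; [|apply (trunc_geom_mean_ge _ (T / 4 + 1)); try lra].
  - rewrite mult_INR. replace (INR 15) with 15 by (rewrite INR_IZR_INZ; reflexivity).
    replace (INR T / 2 / (INR T / 2 + 15 * INR T)) with (1 / 31) by (field; lra). lra.
  - split; [lia|]. pose proof (Nat.Div0.div_le_upper_bound T 4 T). lia.
  - exact HL.
  - rewrite plus_INR. change (INR 1) with 1. lra.
  - replace (T / 4 + 1 - 1)%nat with (T / 4)%nat by lia. lra.
Qed.

Lemma M_block_mean_ge T L R1 : (2 <= T)%nat -> (15 * T <= L)%nat -> (1 <= R1 <= 2 * T)%nat ->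
  3 * INR R1 / 28 <= trunc_geom_mean (INR R1) (5 * T) L.
Proof.
  intros HT HL HR. assert (HTr : 2 <= INR T) by (apply (le_INR 2); lia).
  assert (HR1 : 1 <= INR R1) by (apply (le_INR 1); lia).
  assert (HR2 : INR R1 <= 2 * INR T).
  { replace (2 * INR T) with (INR (2 * T)) by (rewrite mult_INR; reflexivity). apply le_INR. lia. }
  pose proof (INR_div_bounds R1 2 ltac:(lia)) as Hdiv.
  replace (INR 2) with 2 in Hdiv by reflexivity.
  eapply Rle_trans; [|apply (trunc_geom_mean_ge _ (R1 / 2 + 1)); try lra].
  - rewrite mult_INR. replace (INR 5) with 5 by (rewrite INR_IZR_INZ; reflexivity).
    assert (INR R1 / (INR R1 + 5 * INR T) <= 2 / 7).
    { apply (Rmult_le_reg_r (INR R1 + 5 * INR T)); [lra|]. unfold Rdiv at 1.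
      rewrite Rmult_assoc, Rinv_l by lra. lra. }
    nra.
  - split; [lia|]. pose proof (Nat.Div0.div_le_upper_bound R1 2 T). lia.
  - lia.
  - rewrite plus_INR. change (INR 1) with 1. lra.
  - replace (R1 / 2 + 1 - 1)%nat with (R1 / 2)%nat by lia. lra.
Qed.

Lemma trunc_loss_le T D R1 : (2 <= T)%nat -> (1 <= D)%nat -> (R1 <= 2 * T)%nat ->
  INR D * (Rmax (INR T / 2) (INR R1) / INR (100 * T * D)) <= 1 / 50.
Proof.
  intros HT HD HR. assert (HTr : 2 <= INR T) by (apply (le_INR 2); lia).
  assert (HDr : 1 <= INR D) by (apply (le_INR 1); lia).
  assert (Hmax : Rmax (INR T / 2) (INR R1) <= 2 * INR T).
  { apply Rmax_lub; [lra|]. replace (2 * INR T) with (INR (2 * T)) by (rewrite mult_INR; reflexivity).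
    apply le_INR. exact HR. }
  assert (H100 : INR 100 = 100) by (rewrite INR_IZR_INZ; reflexivity).
  rewrite !mult_INR, H100.
  replace (INR D * (Rmax (INR T / 2) (INR R1) / (100 * INR T * INR D)))
    with (Rmax (INR T / 2) (INR R1) / (100 * INR T)) by (field; lra).
  apply (Rmult_le_reg_r (100 * INR T)); [lra|]. unfold Rdiv. rewrite Rmult_assoc, Rinv_l by lra.
  lra.
Qed.

(** Each designated-block term has mean about [r_M T], and the other M-blocks cost at most
    [m r_M / (5T) <= 2/5] of it. *)
Lemma expect_pair_count_lb_ge_sq T Sp Mp y s R1 :
  (2 <= T)%nat -> (1 <= s <= T)%nat -> (s < length y)%nat ->
  Sp (nth 0 y O) = true -> Mp (nth 0 y O) = false -> Sp (nth s y O) = true ->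
  (forall l, (1 <= l < s)%nat -> Sp (nth l y O) = false) ->
  (1 <= R1 <= 2 * T)%nat -> (T <= M_count Mp y s * R1 <= 2 * T)%nat ->
  INR T ^ 2 / 1000 <= sum_tuples (seq 1 (100 * T * length y)) (length y)
    (fun k => cnt_w (INR T / 2) (INR R1) Sp Mp y k * pair_count_lb T Mp y k s).
Proof.
  intros HT Hs HsD HS0 HM0 HSs HSl HR HmR.
  set (D := length y) in *. set (L := (100 * T * D)%nat). set (m := M_count Mp y s) in *.
  assert (HTr : 2 <= INR T) by (apply (le_INR 2); lia).
  assert (HR1 : 1 <= INR R1) by (apply (le_INR 1); lia).
  assert (HL : (15 * T <= L)%nat) by (unfold L; nia).
  set (d := Rmax (INR T / 2) (INR R1) / INR L).
  pose proof (trunc_loss_le T D R1 HT ltac:(lia) ltac:(lia)) as HdD. fold L d in HdD.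
  assert (Hd0 : 0 <= d).
  { apply Rdiv_nonneg; [pose proof (Rmax_r (INR T / 2) (INR R1)); lra|].
    apply lt_0_INR. unfold L. nia. }
  assert (Hd1 : d <= 1) by (assert (1 <= INR D) by (apply (le_INR 1); lia); nra).
  pose proof (expect_pair_count_lb_ge T Sp Mp y s L (INR T / 2) (INR R1) HT Hs HsD HL
    ltac:(lra) HR1 HS0 HM0 HSs HSl Hd1) as Hexp. fold D m d in Hexp.
  eapply Rle_trans; [|exact Hexp].
  assert (Hpow : 49 / 50 <= (1 - d) ^ D) by (pose proof (pow_1_sub_ge d D ltac:(lra)); lra).
  assert (Hm : INR T <= INR m * INR R1 <= 2 * INR T).
  { rewrite <- mult_INR. split; [apply le_INR; lia|].
    replace (2 * INR T) with (INR (2 * T)) by (rewrite mult_INR; reflexivity). apply le_INR. lia. }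
  assert (Hcost : INR m * INR R1 / (5 * INR T) <= 2 / 5).
  { apply (Rmult_le_reg_r (5 * INR T)); [lra|]. unfold Rdiv. rewrite Rmult_assoc, Rinv_l by lra.
    lra. }
  pose proof (first_block_mass_ge T L HT ltac:(lia)) as G0.
  pose proof (S_block_mean_ge T L HT HL) as GS.
  pose proof (M_block_mean_ge T L R1 HT HL HR) as GM.
  unfold block_means.
  set (g0 := trunc_geom_mass (INR T / 2) (4 * T) L) in *.
  set (gM := trunc_geom_mean (INR R1) (5 * T) L) in *.
  set (gS := trunc_geom_mean (INR T / 2) (15 * T) L) in *.
  assert (HmgM : 3 * INR T / 28 <= INR m * gM) by (pose proof (pos_INR m); nra).
  assert (Hprod : 8 / 9 * (3 * INR T / 28) * (INR T / 9) <= g0 * (INR m * gM) * gS).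
  { apply Rmult_le_compat; [nra|lra| |lra]. apply Rmult_le_compat; lra. }
  replace (INR m * (g0 * gM * gS)) with (g0 * (INR m * gM) * gS) by ring.
  apply Rle_trans with (8 / 9 * (3 * INR T / 28) * (INR T / 9) * (49 / 50 - 2 / 5)); [nra|].
  apply Rmult_le_compat; nra.
Qed.

Lemma first_idx_spec p l h : first_idx p l = Some h ->
  (h < length l)%nat /\ p (nth h l O) = true /\ forall l', (l' < h)%nat -> p (nth l' l O) = false.
Proof.
  revert h. induction l as [|a l IH]; simpl; intros h H; [discriminate|].
  destruct (p a) eqn:Ha.
  - injection H as <-. repeat split; [lia|exact Ha|intros; lia].
  - destruct (first_idx p l) as [h'|]; simpl in H; [|discriminate].
    injection H as <-. destruct (IH h' eq_refl) as [H1 [H2 H3]].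
    repeat split; [lia|exact H2|]. intros [|l'] Hl'; [exact Ha|]. apply H3. lia.
Qed.

Lemma countb_eq_0 p l : countb p l = O -> forall i, (i < length l)%nat -> p (nth i l O) = false.
Proof.
  induction l as [|a l IH]; simpl; intros H i Hi; [lia|]. unfold countb in *. simpl in H.
  destruct (p a) eqn:Ha; simpl in H; [lia|]. destruct i; [exact Ha|]. apply IH; auto. lia.
Qed.

Lemma E_ev_structure Sp Mp T y : E_ev Sp Mp T y = true -> Sp (nth 0 y O) = true ->
  (T < length y)%nat ->
  exists s h, (1 <= s <= T)%nat /\ (s < length y)%nat /\ Sp (nth s y O) = true /\
    (forall l, (1 <= l < s)%nat -> Sp (nth l y O) = false) /\ (h < s)%nat /\ Mp (nth h y O) = true.
Proof.
  intros HE HS0 HTl. unfold E_ev in HE.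
  destruct (first_idx Mp y) as [h|] eqn:Eh; [|discriminate].
  destruct (first_idx Sp (skipn (S h) y)) as [e|] eqn:Ee; [|discriminate].
  apply andb_prop in HE as [HE1%Nat.leb_le HE2%Nat.eqb_eq].
  apply first_idx_spec in Eh as [H1 [H2 H3]]. apply first_idx_spec in Ee as [H4 [H5 H6]].
  rewrite length_skipn in H4. rewrite nth_skipn in H5.
  exists (S h + e)%nat, h. repeat split; try lia; try assumption.
  intros l Hl. destruct (Nat.le_gt_cases l h).
  - destruct y as [|a y']; [simpl in H1; lia|]. simpl in HS0, HE2, H1.
    unfold countb in HE2. simpl in HE2. rewrite HS0 in HE2. simpl in HE2. injection HE2 as HE2.
    destruct l as [|l']; [lia|]. simpl.
    pose proof (countb_eq_0 Sp (firstn h y') HE2 l') as Hc.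
    rewrite length_firstn, nth_firstn in Hc. destruct (Nat.ltb_spec l' h); [|lia]. apply Hc. lia.
  - specialize (H6 (l - S h)%nat ltac:(lia)). rewrite nth_skipn in H6.
    replace (S h + (l - S h))%nat with l in H6 by lia. exact H6.
Qed.

Lemma exists_scale T m : (2 <= T)%nat -> (1 <= m <= T)%nat ->
  exists j, (j <= Jmax T)%nat /\ (1 <= 2 ^ j <= 2 * T)%nat /\ (T <= m * 2 ^ j <= 2 * T)%nat.
Proof.
  intros HT Hm. set (q := (2 * T / m)%nat).
  assert (Hq : (2 <= q)%nat) by (apply Nat.div_le_lower_bound; lia).
  assert (HqT : (q <= 2 * T)%nat) by (apply Nat.Div0.div_le_upper_bound; nia).
  destruct (Nat.log2_spec q ltac:(lia)) as [Hl1 Hl2].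
  exists (Nat.log2 q). set (R1 := (2 ^ Nat.log2 q)%nat) in *.
  assert (HR : (2 ^ S (Nat.log2 q) = 2 * R1)%nat) by (unfold R1; simpl; lia).
  pose proof (Nat.div_mod (2 * T) m ltac:(lia)) as Hdm.
  pose proof (Nat.mod_upper_bound (2 * T) m ltac:(lia)) as Hmod. fold q in Hdm.
  repeat split; try nia.
  unfold Jmax. apply (Nat.pow_le_mono_r_iff 2); [lia|].
  pose proof (Nat.log2_up_spec (14 * T) ltac:(lia)) as [_ Hu]. fold R1. lia.
Qed.

Lemma M_count_bounds Mp y s h : (h < s)%nat -> Mp (nth h y O) = true ->
  (1 <= M_count Mp y s <= s)%nat.
Proof.
  intros Hh HMh. unfold M_count. split.
  - destruct (filter (fun l => Mp (nth l y O)) (seq 0 s)) eqn:F; simpl; [|lia].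
    assert (Hin : In h (filter (fun l => Mp (nth l y O)) (seq 0 s)))
      by (apply filter_In; split; [apply in_seq; lia|exact HMh]).
    rewrite F in Hin. contradiction.
  - rewrite <- (length_seq s 0) at 2. apply filter_length_le.
Qed.

Lemma path_lower_bound T Sp Mp y : (2 <= T)%nat -> length y = Dlen T ->
  E_ev Sp Mp T y = true -> Sp (nth 0 y O) = true -> Mp (nth 0 y O) = false ->
  exists j, (j <= Jmax T)%nat /\
  INR T ^ 2 / 1000 <= sumR (map (fun t => sumR (map (fun t' =>
     sum_tuples (seq 1 (100 * T * Dlen T)) (Dlen T) (fun k =>
       cnt_w (INR T / 2) (2 ^ j) Sp Mp y k *
       ind (andb (Mp (nth t (expand y k) O)) (Sp (nth (t + t') (expand y k) O)))))
     (seq 1 (30 * T)))) (seq 1 (30 * T))).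
Proof.
  intros HT Hy HE HS0 HM0.
  destruct (E_ev_structure Sp Mp T y HE HS0 ltac:(unfold Dlen in Hy; lia))
    as [s [h [Hs [HsD [HSs [HSl [Hh HMh]]]]]]].
  pose proof (M_count_bounds Mp y s h Hh HMh) as Hm.
  destruct (exists_scale T (M_count Mp y s) HT ltac:(lia)) as [j [Hj [HR1 HmR]]].
  exists j. split; [exact Hj|].
  pose proof (expect_pair_count_lb_ge_sq T Sp Mp y s (2 ^ j) HT Hs HsD HS0 HM0 HSs HSl HR1 HmR)
    as Hlb.
  rewrite pow_INR, Hy in Hlb. replace (INR 2) with 2 in Hlb by reflexivity.
  eapply Rle_trans; [exact Hlb|]. unfold sum_tuples. rewrite sumR_swap3_scal.
  apply sumR_le. intros k Hk. apply in_tuples in Hk as [Hkl Hkin].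
  apply Rmult_le_compat_l.
  - apply cnt_w_nonneg; [pose proof (le_INR 2 T HT); simpl in *; lra|apply pow_R1_Rle; lra].
  - apply good_pairs_ge_pair_count_lb; try lia; try assumption.
    intros l Hl. assert (Hin : In (nth l k O) (seq 1 (100 * T * Dlen T))) by (apply Hkin, nth_In; lia).
    apply in_seq in Hin. lia.
Qed.

(** * Averaging over the paths *)

(** [Rsup] of an unbounded set is an arbitrary [epsilon] choice, hence the bound [B]. *)
Lemma Rsup_ge (f : nat -> R) B L0 : (forall L, f L <= B) ->
  f L0 <= Rsup (fun x => exists L, x = f L).
Proof.
  intros HB. unfold Rsup. set (A := fun x => exists L, x = f L).
  assert (Hex : exists l, is_lub A l).
  { destruct (completeness A) as [m Hm].
    - exists B. intros x [L ->]. apply HB.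
    - exists (f 0%nat), 0%nat. reflexivity.
    - exists m. exact Hm. }
  apply (proj1 (epsilon_spec (inhabits 0) (fun l => is_lub A l) Hex)). exists L0. reflexivity.
Qed.

Lemma chain_w_nonneg n P x l : (forall i j, (i < n)%nat -> (j < n)%nat -> 0 <= P i j) ->
  (x < n)%nat -> (forall z, In z l -> (z < n)%nat) -> 0 <= chain_w P x l.
Proof.
  intros HP. revert x. induction l as [|a l IH]; intros x Hx Hl; simpl; [lra|].
  assert (Ha : (a < n)%nat) by (apply Hl; left; reflexivity).
  apply Rmult_le_pos; [apply HP; assumption|]. apply IH; [exact Ha|].
  intros z Hz. apply Hl. right. exact Hz.
Qed.

Lemma path_weight_nonneg n P kappa D y :
  (forall i j, (i < n)%nat -> (j < n)%nat -> 0 <= P i j) ->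
  (forall i, 0 <= kappa i) -> In y (tuples (seq 0 n) D) -> 0 <= path_weight kappa P y.
Proof.
  intros HP Hk Hy. apply in_tuples in Hy as [_ Hin].
  destruct y as [|y0 l]; simpl; [lra|]. apply Rmult_le_pos; [apply Hk|].
  assert (Hlt : forall z, In z (y0 :: l) -> (z < n)%nat) by (intros z Hz; apply Hin, in_seq in Hz; lia).
  apply (chain_w_nonneg n); [exact HP|apply Hlt; left; reflexivity|].
  intros z Hz. apply Hlt. right. exact Hz.
Qed.

Section JointBounds.
Variables (n : nat) (P : nat -> nat -> R) (kappa : nat -> R) (Sp Mp : nat -> bool) (T : nat).
Hypotheses (HP : forall i j, (i < n)%nat -> (j < n)%nat -> 0 <= P i j)
  (Hkappa : forall i, 0 <= kappa i) (HT : (2 <= T)%nat).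

Let HrS : 1 <= INR T / 2.
Proof. pose proof (le_INR 2 T HT). simpl in *. lra. Qed.

Lemma joint_partial_le_joint j t t' L :
  joint_partial n P kappa Sp Mp T (INR T / 2) (2 ^ j) t t' L <=
  joint n P kappa Sp Mp T (INR T / 2) (2 ^ j) t t'.
Proof.
  assert (HrM : 1 <= 2 ^ j) by (apply pow_R1_Rle; lra).
  apply (Rsup_ge (joint_partial n P kappa Sp Mp T (INR T / 2) (2 ^ j) t t')
           (sum_tuples (seq 0 n) (Dlen T) (path_weight kappa P))).
  intros L'. unfold joint_partial, sum_tuples. apply sumR_le. intros y Hy.
  pose proof (path_weight_nonneg n P kappa (Dlen T) y HP Hkappa Hy) as Hw.
  apply in_tuples in Hy as [Hyl _].
  pose proof (sum_cnt_w_le_1 (INR T / 2) (2 ^ j) Sp Mp L' (Dlen T) y HrS HrM Hyl) as Hc.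
  unfold sum_tuples in Hc. rewrite <- (Rmult_1_r (path_weight kappa P y)).
  eapply Rle_trans; [|apply Rmult_le_compat_l; [exact Hw|exact Hc]].
  rewrite <- sumR_scal_l. apply sumR_le. intros k _.
  pose proof (cnt_w_nonneg (INR T / 2) (2 ^ j) Sp Mp y k HrS HrM).
  match goal with |- _ * ind ?b <= _ => pose proof (ind_bounds b) end.
  assert (0 <= path_weight kappa P y * cnt_w (INR T / 2) (2 ^ j) Sp Mp y k)
    by (apply Rmult_le_pos; assumption).
  nra.
Qed.

Hypotheses (Hdisj : forall i, (i < n)%nat -> Sp i = true -> Mp i = false)
  (Hsupp : forall i, 0 < kappa i -> (i < n)%nat /\ Sp i = true).

Lemma sum_joint_partial_ge :
  INR T ^ 2 / 1000 * probE n P kappa Sp Mp T <=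
  sumR (map (fun t => sumR (map (fun t' => sumR (map (fun j =>
    joint_partial n P kappa Sp Mp T (INR T / 2) (2 ^ j) t t' (100 * T * Dlen T))
    (seq 0 (Jmax T + 1)))) (seq 1 (30 * T)))) (seq 1 (30 * T))).
Proof.
  set (L := (100 * T * Dlen T)%nat).
  set (G := fun y j t t' => sum_tuples (seq 1 L) (Dlen T) (fun k =>
    cnt_w (INR T / 2) (2 ^ j) Sp Mp y k *
    ind (andb (Mp (nth t (expand y k) O)) (Sp (nth (t + t') (expand y k) O))))).
  rewrite (sumR_ext _ (fun t => sumR (map (fun t' => sumR (map (fun j =>
    sumR (map (fun y => (path_weight kappa P y * ind (E_ev Sp Mp T y)) * G y j t t')
      (tuples (seq 0 n) (Dlen T)))) (seq 0 (Jmax T + 1)))) (seq 1 (30 * T))))).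
  2:{ intros t _. apply sumR_ext. intros t' _. apply sumR_ext. intros j _.
      apply sumR_ext. intros y _. unfold G, sum_tuples. rewrite <- sumR_scal_l.
      apply sumR_ext. intros k _. rewrite <- Bool.andb_assoc, ind_andb. ring. }
  rewrite sumR_swap4_scal. unfold probE, sum_tuples at 1.
  rewrite <- sumR_scal_l. apply sumR_le. intros y Hy.
  pose proof (path_weight_nonneg n P kappa (Dlen T) y HP Hkappa Hy) as Hw.
  apply in_tuples in Hy as [Hyl _].
  destruct (E_ev Sp Mp T y) eqn:HE; unfold ind; [rewrite Rmult_1_r|lra].
  destruct (Req_dec (path_weight kappa P y) 0) as [Hw0|Hw0]; [rewrite Hw0; lra|].
  destruct y as [|y0 yl]; [simpl in Hw0; lra|].
  assert (Hky : 0 < kappa y0).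
  { simpl in Hw0. destruct (Req_dec (kappa y0) 0) as [K|K]; [rewrite K in Hw0; lra|].
    pose proof (Hkappa y0). lra. }
  destruct (Hsupp y0 Hky) as [Hy0n HSy0].
  destruct (path_lower_bound T Sp Mp (y0 :: yl) HT Hyl HE HSy0 (Hdisj y0 Hy0n HSy0))
    as [j0 [Hj0 Hg]].
  rewrite Rmult_comm. apply Rmult_le_compat_l; [exact Hw|].
  eapply Rle_trans; [exact Hg|]. apply sumR_le. intros t _. apply sumR_le. intros t' _.
  apply (sumR_ge_term (fun j => G (y0 :: yl) j t t')); [|apply in_seq; lia].
  intros j _. apply sumR_nonneg. intros k _. apply Rmult_le_pos; [|apply ind_bounds].
  apply cnt_w_nonneg; [exact HrS|apply pow_R1_Rle; lra].
Qed.

Lemma sum_cond_prob_ge : 0 < probE n P kappa Sp Mp T ->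
  INR T ^ 2 / 1000 <= sumR (map (fun t => sumR (map (fun t' => sumR (map (fun j =>
    cond_prob n P kappa Sp Mp T (INR T / 2) (2 ^ j) t t')
    (seq 0 (Jmax T + 1)))) (seq 1 (30 * T)))) (seq 1 (30 * T))).
Proof.
  intros HpE. set (pE := probE n P kappa Sp Mp T) in *. unfold cond_prob, Rdiv. fold pE.
  rewrite (sumR_ext _ (fun t => sumR (map (fun t' => sumR (map (fun j =>
      joint n P kappa Sp Mp T (INR T / 2) (2 ^ j) t t') (seq 0 (Jmax T + 1))))
      (seq 1 (30 * T))) * / pE)).
  2:{ intros t _. rewrite <- sumR_scal_r. apply sumR_ext. intros t' _. apply sumR_scal_r. }
  rewrite sumR_scal_r. apply (Rmult_le_reg_r pE); [exact HpE|].
  rewrite (Rmult_assoc (sumR _)), Rinv_l, Rmult_1_r by lra.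
  eapply Rle_trans; [apply sum_joint_partial_ge|].
  apply sumR_le. intros. apply sumR_le. intros. apply sumR_le. intros.
  apply joint_partial_le_joint.
Qed.

End JointBounds.

Lemma Jmax_succ_le_ln T : (2 <= T)%nat -> INR (Jmax T + 1) <= 14 * ln (INR T).
Proof.
  intros HT. set (l := Nat.log2_up T).
  destruct (Nat.log2_up_spec T ltac:(lia)) as [H1 H2]. fold l in H1, H2.
  assert (Hl1 : (1 <= l)%nat) by (apply Nat.log2_up_pos; lia).
  assert (HJ : (Jmax T <= 4 + l)%nat).
  { unfold Jmax. apply Nat.log2_up_le_pow2; [lia|]. rewrite Nat.pow_add_r. simpl. lia. }
  assert (HTr : 2 <= INR T) by (apply (le_INR 2); lia).
  assert (Hp : 2 ^ (l - 1) < INR T).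
  { replace 2 with (INR 2) by reflexivity. rewrite <- pow_INR. apply lt_INR.
    replace (l - 1)%nat with (Nat.pred l) by lia. exact H1. }
  assert (Hln : INR (l - 1) * ln 2 < ln (INR T)).
  { rewrite <- ln_pow by lra. apply ln_increasing; [apply pow_lt; lra|exact Hp]. }
  pose proof ln_lt_2.
  assert (ln 2 <= ln (INR T)).
  { destruct (Req_dec (INR T) 2) as [E|E]; [rewrite E; lra|]. left. apply ln_increasing; lra. }
  pose proof (pos_INR (l - 1)).
  assert (INR (Jmax T + 1) <= INR (l - 1) + 6).
  { replace 6 with (INR 6) by (simpl; ring). rewrite <- plus_INR. apply le_INR. lia. }
  nra.
Qed.

Lemma avg_cond_ge_of_sum n P kappa Sp Mp T : (2 <= T)%nat ->
  INR T ^ 2 / 1000 <= sumR (map (fun t => sumR (map (fun t' => sumR (map (fun j =>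
    cond_prob n P kappa Sp Mp T (INR T / 2) (2 ^ j) t t')
    (seq 0 (Jmax T + 1)))) (seq 1 (30 * T)))) (seq 1 (30 * T))) ->
  avg_cond n P kappa Sp Mp T >= 1 / 12600000 / ln (INR T).
Proof.
  intros HT Hsum. unfold avg_cond. apply Rle_ge.
  assert (HTr : 2 <= INR T) by (apply (le_INR 2); lia).
  pose proof (Jmax_succ_le_ln T HT) as HJ.
  assert (HJ1 : 1 <= INR (Jmax T + 1)) by (apply (le_INR 1); lia).
  assert (Hln : 0 < ln (INR T)) by (rewrite <- ln_1; apply ln_increasing; lra).
  assert (HDen : INR (30 * T) * INR (30 * T) * INR (Jmax T + 1) =
                 900 * INR T ^ 2 * INR (Jmax T + 1)).
  { rewrite mult_INR. replace (INR 30) with 30 by (rewrite INR_IZR_INZ; reflexivity). ring. }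
  rewrite HDen.
  apply Rle_trans with (INR T ^ 2 / 1000 / (900 * INR T ^ 2 * INR (Jmax T + 1))).
  - apply (Rmult_le_reg_r (900000 * INR (Jmax T + 1) * ln (INR T))); [nra|].
    replace (1 / 12600000 / ln (INR T) * (900000 * INR (Jmax T + 1) * ln (INR T)))
      with (INR (Jmax T + 1) / 14) by (field; lra).
    replace (INR T ^ 2 / 1000 / (900 * INR T ^ 2 * INR (Jmax T + 1)) *
             (900000 * INR (Jmax T + 1) * ln (INR T))) with (ln (INR T)) by (field; lra).
    lra.
  - unfold Rdiv at 1 3. apply Rmult_le_compat_r; [|exact Hsum].
    left. apply Rinv_0_lt_compat. nra.
Qed.

Theorem mainTheorem10 :
  exists c : R, 0 < c /\
  forall (n : nat) (P : nat -> nat -> R) (S M : nat -> bool) (kappa : nat -> R) (T : nat),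
    (forall i j, (i < n)%nat -> (j < n)%nat -> 0 <= P i j) ->
    (forall i, (i < n)%nat -> sumR (map (P i) (seq 0 n)) = 1) ->
    (forall i, (i < n)%nat -> S i = true -> M i = false) ->
    (forall i, 0 <= kappa i) ->
    sumR (map kappa (seq 0 n)) = 1 ->
    (forall i, 0 < kappa i -> (i < n)%nat /\ S i = true) ->
    (2 <= T)%nat ->
    Nat.even T = true ->
    0 < probE n P kappa S M T ->
    avg_cond n P kappa S M T >= c / ln (INR T).
Proof.
  exists (1 / 12600000). split; [lra|].
  intros n P S M kappa T HP _ Hdisj Hkappa _ Hsupp HT _ HpE.
  apply avg_cond_ge_of_sum; [exact HT|].
  apply sum_cond_prob_ge; assumption.
Qed.
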